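(* The category $\mathsf{WHB}$ of WHB-algebras with algebra homomorphisms is dually equivalent to the category $\mathsf{WHBS}$ of WHB-spaces with WHBS-morphisms. The dual equivalence is given by the contravariant functors $\mathrm{X}\colon \mathsf{WHB}\to\mathsf{WHBS}$ and $\mathrm{D}\colon \mathsf{WHBS}\to\mathsf{WHB}$ described below, with natural isomorphisms $\sigma\colon \mathrm{I}_{\mathsf{WHB}}\to \mathrm{D}\circ\mathrm{X}$ and $\epsilon\colon \mathrm{I}_{\mathsf{WHBS}}\to\mathrm{X}\circ\mathrm{D}$ given by $\sigma_{\mathbf{A}}(a)=\{P\in X(\mathbf{A})\colon a\in P\}$ and $\epsilon_X(x)=\{U\in D(X)\colon x\in U\}$.
   Context: A WH-algebra is an algebra $(A,\wedge,\vee,\to,0,1)$ such that $(A,\wedge,\vee,0,1)$ is a bounded distributive lattice and for all $a,b,c$: $a\to a=1$; $a\to(b\wedge c)=(a\to b)\wedge(a\to c)$; $(a\vee b)\to c=(a\to c)\wedge(b\to c)$; $(a\to b)\wedge(b\to c)\le a\to c$. A WD-algebra is an algebra $(A,\wedge,\vee,\leftarrow,0,1)$ with bounded distributive lattice reduct such that for all $a,b,c$: $a\leftarrow a=0$; $(a\vee b)\leftarrow c=(a\leftarrow c)\vee(b\leftarrow c)$; $a\leftarrow(b\wedge c)=(a\leftarrow b)\vee(a\leftarrow c)$; $a\leftarrow c\le(a\leftarrow b)\vee(b\leftarrow c)$. A WHB-algebra is an algebra $(A,\wedge,\vee,\to,\leftarrow,0,1)$ whose $\to$-reduct is a WH-algebra,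 whose $\leftarrow$-reduct is a WD-algebra, and which satisfies for all $a,b$: (E1) $a\wedge((a\to b)\leftarrow 0)\le b$ and (E2) $a\le b\vee(1\to(a\leftarrow b))$. For a relation $\mathcal R$ on $X$, $\mathcal R(x)=\{y\colon (x,y)\in\mathcal R\}$ and $\mathcal R^{-1}(U)=\{x\colon \mathcal R(x)\cap U\neq\emptyset\}$. A WHB-frame is $(X,\le,R,S)$ with $\le$ a partial order and $R,S$ binary relations on $X$ such that: if $x\le y$ and $(y,z)\in R$ then $(x,z)\in R$; if $x\le y$ and $(x,z)\in S$ then $(y,z)\in S$; and $S=R^{-1}$ (i.e. $(x,y)\in S$ iff $(y,x)\in R$). For upsets $U,V$ put $U\Rightarrow_R V=\{x\colon R(x)\cap U\subseteq V\}$ and $U\Leftarrow_S V=\{x\colon S(x)\cap(U\setminus V)\neq\emptyset\}$. A WHB-space is $(X,\tau,\le,R,S)$ such that $(X,\tau,\le)$ is a Priestley space, $(X,\le,R,S)$ is a WHB-frame, $R(x)$ and $S(x)$ are $\tau$-closed for every $x$, and $R^{-1}(U)$, $S^{-1}(U)$ are clopen for every clopen $U$. A WHBS-morphism $f\colon (X_1,\tau_1,\le_1,R_1,S_1)\to(X_2,\tau_2,\le_2,R_2,S_2)$ is a continuous order-preserving map such that for $\mathcal R\in\{R,S\}$: $(x,y)\in\mathcal R_1$ implies $(f(x),f(y))\in\mathcal R_2$; and if $(f(x),z)\in\mathcal R_2$ then there is $y\in\mathcal R_1(x)$ with $f(y)=z$. For a WHB-space $X$, $\mathrm{D}(X)=(D(X),\cap,\cup,\Rightarrow_R,\Leftarrow_S,\emptyset,X)$,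 where $D(X)$ is the set of clopen upsets; for a morphism $f$, $\mathrm{D}(f)(U)=f^{-1}(U)$. For a WHB-algebra $\mathbf A$, $X(\mathbf A)$ is the set of prime filters, $\tau_{\mathbf A}$ the topology with subbase $\{\sigma_{\mathbf A}(a)\}\cup\{X(\mathbf A)\setminus\sigma_{\mathbf A}(a)\}$, $(P,Q)\in R_{\mathbf A}$ iff for all $a,b$ ($a\to b\in P$ and $a\in Q$ imply $b\in Q$), $(P,Q)\in S_{\mathbf A}$ iff for all $a,b$ ($a\in Q$ and $b\notin Q$ imply $a\leftarrow b\in P$), and $\mathrm X(\mathbf A)=(X(\mathbf A),\tau_{\mathbf A},\subseteq,R_{\mathbf A},S_{\mathbf A})$; for a homomorphism $h\colon\mathbf A_1\to\mathbf A_2$, $\mathrm X(h)(P)=h^{-1}(P)$. *)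

From Stdlib Require Import Classical List.
Set Implicit Arguments.
Unset Strict Implicit.

Record AlgData := {
  acar :> Type;
  ameet : acar -> acar -> acar;
  ajoin : acar -> acar -> acar;
  aimp : acar -> acar -> acar;
  acoimp : acar -> acar -> acar;
  abot : acar;
  atop : acar }.

Arguments ameet : clear implicits.
Arguments ajoin : clear implicits.
Arguments aimp : clear implicits.
Arguments acoimp : clear implicits.
Arguments abot : clear implicits.
Arguments atop : clear implicits.

Definition ale (A : AlgData) (a b : A) : Prop := ameet A a b = a.

Record isWHB (A : AlgData) : Prop := {
  meetC : forall a b : A, ameet A a b = ameet A b a;
  joinC : forall a b : A, ajoin A a b = ajoin A b a;
  meetA : forall a b c : A, ameet A a (ameet A b c) = ameet A (ameet A a b) c;
  joinA : forall a b c : A, ajoin A a (ajoin A b c) = ajoin A (ajoin A a b) c;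
  meetKj : forall a b : A, ameet A a (ajoin A a b) = a;
  joinKm : forall a b : A, ajoin A a (ameet A a b) = a;
  meetDj : forall a b c : A,
      ameet A a (ajoin A b c) = ajoin A (ameet A a b) (ameet A a c);
  join0 : forall a : A, ajoin A a (abot A) = a;
  meet1 : forall a : A, ameet A a (atop A) = a;
  (* WH-algebra axioms for -> *)
  imp_refl : forall a : A, aimp A a a = atop A;
  imp_meet : forall a b c : A,
      aimp A a (ameet A b c) = ameet A (aimp A a b) (aimp A a c);
  imp_join : forall a b c : A,
      aimp A (ajoin A a b) c = ameet A (aimp A a c) (aimp A b c);
  imp_trans : forall a b c : A,
      ale (ameet A (aimp A a b) (aimp A b c)) (aimp A a c);
  (* WD-algebra axioms for <- *)
  coimp_refl : forall a : A, acoimp A a a = abot A;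
  coimp_join : forall a b c : A,
      acoimp A (ajoin A a b) c = ajoin A (acoimp A a c) (acoimp A b c);
  coimp_meet : forall a b c : A,
      acoimp A a (ameet A b c) = ajoin A (acoimp A a b) (acoimp A a c);
  coimp_trans : forall a b c : A,
      ale (acoimp A a c) (ajoin A (acoimp A a b) (acoimp A b c));
  E1 : forall a b : A, ale (ameet A a (acoimp A (aimp A a b) (abot A))) b;
  E2 : forall a b : A, ale a (ajoin A b (aimp A (atop A) (acoimp A a b))) }.

Record hom (A B : AlgData) (h : A -> B) : Prop := {
  hom_meet : forall a b, h (ameet A a b) = ameet B (h a) (h b);
  hom_join : forall a b, h (ajoin A a b) = ajoin B (h a) (h b);
  hom_imp : forall a b, h (aimp A a b) = aimp B (h a) (h b);
  hom_coimp : forall a b, h (acoimp A a b) = acoimp B (h a) (h b);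
  hom_bot : h (abot A) = abot B;
  hom_top : h (atop A) = atop B }.

Definition alg_iso (A B : AlgData) (h : A -> B) : Prop :=
  hom h /\ exists g : B -> A, hom g /\ (forall a, g (h a) = a) /\ (forall b, h (g b) = b).

Record prime_filter (A : AlgData) (P : A -> Prop) : Prop := {
  pf_top : P (atop A);
  pf_meet : forall a b, P a -> P b -> P (ameet A a b);
  pf_up : forall a b, P a -> ale a b -> P b;
  pf_proper : ~ P (abot A);
  pf_prime : forall a b, P (ajoin A a b) -> P a \/ P b }.

(* A topology, given by its family of open sets (subsets = predicates;
   top_ext records that it is a family of sets, i.e. extensional). *)
Record is_topology (T : Type) (O : (T -> Prop) -> Prop) : Prop := {
  top_ext : forall U V, O U -> (forall x, U x <-> V x) -> O V;
  top_empty : O (fun _ => False);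
  top_full : O (fun _ => True);
  top_inter : forall U V, O U -> O V -> O (fun x => U x /\ V x);
  top_union : forall F, (forall U, F U -> O U) -> O (fun x => exists U, F U /\ U x) }.

Definition compact (T : Type) (O : (T -> Prop) -> Prop) : Prop :=
  forall F : (T -> Prop) -> Prop, (forall U, F U -> O U) ->
    (forall x, exists U, F U /\ U x) ->
    exists l : list (T -> Prop), (forall U, In U l -> F U) /\
      (forall x, exists U, In U l /\ U x).

Record SpData := {
  pt : Type;
  opens : (pt -> Prop) -> Prop;
  sle : pt -> pt -> Prop;
  sR : pt -> pt -> Prop;
  sS : pt -> pt -> Prop }.

Arguments opens : clear implicits.
Arguments sle : clear implicits.
Arguments sR : clear implicits.
Arguments sS : clear implicits.

Definition clopen (X : SpData) (U : pt X -> Prop) : Prop :=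
  opens X U /\ opens X (fun x => ~ U x).
Definition upset (X : SpData) (U : pt X -> Prop) : Prop :=
  forall x y, sle X x y -> U x -> U y.
Arguments clopen : clear implicits.
Arguments upset : clear implicits.
Definition preR (X : SpData) (U : pt X -> Prop) : pt X -> Prop :=
  fun x => exists y, sR X x y /\ U y.
Definition preS (X : SpData) (U : pt X -> Prop) : pt X -> Prop :=
  fun x => exists y, sS X x y /\ U y.

Arguments preR : clear implicits.
Arguments preS : clear implicits.

Record isWHBS (X : SpData) : Prop := {
  sp_top : is_topology (opens X);
  sp_compact : compact (opens X);
  le_refl : forall x, sle X x x;
  le_trans : forall x y z, sle X x y -> sle X y z -> sle X x z;
  le_anti : forall x y, sle X x y -> sle X y x -> x = y;
  priestley : forall x y, ~ sle X x y ->
      exists U, clopen X U /\ upset X U /\ U x /\ ~ U y;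
  R_down : forall x y z, sle X x y -> sR X y z -> sR X x z;
  S_up : forall x y z, sle X x y -> sS X x z -> sS X y z;
  S_conv : forall x y, sS X x y <-> sR X y x;
  R_closed : forall x, opens X (fun y => ~ sR X x y);
  S_closed : forall x, opens X (fun y => ~ sS X x y);
  R_inv_clopen : forall U, clopen X U -> clopen X (preR X U);
  S_inv_clopen : forall U, clopen X U -> clopen X (preS X U) }.

Record WHBSpace := { wsp :> SpData; wsp_ax : isWHBS wsp }.

Record whbs_morphism (X1 X2 : SpData) (f : pt X1 -> pt X2) : Prop := {
  mor_cont : forall U, opens X2 U -> opens X1 (fun x => U (f x));
  mor_mono : forall x y, sle X1 x y -> sle X2 (f x) (f y);
  mor_R_forth : forall x y, sR X1 x y -> sR X2 (f x) (f y);
  mor_R_back : forall x z, sR X2 (f x) z -> exists y, sR X1 x y /\ f y = z;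
  mor_S_forth : forall x y, sS X1 x y -> sS X2 (f x) (f y);
  mor_S_back : forall x z, sS X2 (f x) z -> exists y, sS X1 x y /\ f y = z }.

Arguments whbs_morphism : clear implicits.

Definition space_iso (X1 X2 : SpData) (f : pt X1 -> pt X2) : Prop :=
  whbs_morphism X1 X2 f /\ exists g : pt X2 -> pt X1, whbs_morphism X2 X1 g /\
    (forall x, g (f x) = x) /\ (forall y, f (g y) = y).

Arguments space_iso : clear implicits.

Definition PF (A : AlgData) : Type := { P : A -> Prop | prime_filter P }.

Definition subbase (A : AlgData) (V : PF A -> Prop) : Prop :=
  (exists a, forall P, V P <-> proj1_sig P a) \/
  (exists a, forall P, V P <-> ~ proj1_sig P a).

Definition gen_opens (A : AlgData) (V : PF A -> Prop) : Prop :=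
  forall O, is_topology O -> (forall W, subbase W -> O W) -> O V.

Definition Xd (A : AlgData) : SpData := {|
  pt := PF A;
  opens := @gen_opens A;
  sle := fun P Q => forall a, proj1_sig P a -> proj1_sig Q a;
  sR := fun P Q => forall a b, proj1_sig P (aimp A a b) -> proj1_sig Q a -> proj1_sig Q b;
  sS := fun P Q => forall a b, proj1_sig Q a -> ~ proj1_sig Q b -> proj1_sig P (acoimp A a b) |}.

Section DualAlg.
Variable X : WHBSpace.
Let HX := wsp_ax X.
Let HT := sp_top HX.

Lemma opens_union2 (U V : pt X -> Prop) :
  opens X U -> opens X V -> opens X (fun x => U x \/ V x).
Proof.
intros HU HV.
pose proof (top_union HT (F := fun W => W = U \/ W = V)) as H.
eapply (top_ext HT); [apply H|].
- intros W [->| ->]; assumption.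
- intros x; split.
  + intros [W [[-> | ->] Hx]]; [left|right]; exact Hx.
  + intros [Hx|Hx]; [exists U|exists V]; auto.
Qed.

Lemma clopen_ext (U V : pt X -> Prop) :
  clopen X U -> (forall x, U x <-> V x) -> clopen X V.
Proof.
intros [H1 H2] E; split.
- exact (top_ext HT H1 E).
- apply (top_ext HT H2); intros x; rewrite (E x); tauto.
Qed.

Lemma clopen_compl (U : pt X -> Prop) : clopen X U -> clopen X (fun x => ~ U x).
Proof.
intros [H1 H2]; split; [exact H2|].
apply (top_ext HT H1); intros x; split; [tauto|].
intros H; apply NNPP; exact H.
Qed.

Lemma clopen_inter (U V : pt X -> Prop) :
  clopen X U -> clopen X V -> clopen X (fun x => U x /\ V x).
Proof.
intros [U1 U2] [V1 V2]; split; [exact (top_inter HT U1 V1)|].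
apply (top_ext HT (opens_union2 U2 V2)); intros x; split.
- intros [H|H] [H1 H2]; tauto.
- intros H; destruct (classic (U x)); [right|left]; tauto.
Qed.

Lemma clopen_union (U V : pt X -> Prop) :
  clopen X U -> clopen X V -> clopen X (fun x => U x \/ V x).
Proof.
intros HU HV.
apply clopen_ext with (U := fun x => ~ (~ U x /\ ~ V x)).
- apply clopen_compl, clopen_inter; apply clopen_compl; assumption.
- intros x; split; [|tauto].
  intros H; destruct (classic (U x)); [left|right]; tauto.
Qed.

Definition cu (U : pt X -> Prop) : Prop := clopen X U /\ upset X U.
Definition Dcar : Type := { U : pt X -> Prop | cu U }.

Lemma cu_bot : cu (fun _ => False).
Proof.
split; [split|].
- exact (top_empty HT).
- apply (top_ext HT (top_full HT)); tauto.
- intros x y _ [].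
Qed.

Lemma cu_top : cu (fun _ => True).
Proof.
split; [split|].
- exact (top_full HT).
- apply (top_ext HT (top_empty HT)); tauto.
- intros x y _ _; exact I.
Qed.

Lemma cu_meet (U V : Dcar) : cu (fun x => proj1_sig U x /\ proj1_sig V x).
Proof.
destruct U as [U [HU1 HU2]], V as [V [HV1 HV2]]; simpl; split.
- apply clopen_inter; assumption.
- intros x y Hxy [Hx Hy]; split; [exact (HU2 x y Hxy Hx)|exact (HV2 x y Hxy Hy)].
Qed.

Lemma cu_join (U V : Dcar) : cu (fun x => proj1_sig U x \/ proj1_sig V x).
Proof.
destruct U as [U [HU1 HU2]], V as [V [HV1 HV2]]; simpl; split.
- apply clopen_union; assumption.
- intros x y Hxy [Hx|Hy]; [left; exact (HU2 x y Hxy Hx)|right; exact (HV2 x y Hxy Hy)].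
Qed.

Lemma cu_imp (U V : Dcar) :
  cu (fun x => forall y, sR X x y -> proj1_sig U y -> proj1_sig V y).
Proof.
destruct U as [U [HU1 HU2]], V as [V [HV1 HV2]]; simpl; split.
- apply clopen_ext with (U := fun x => ~ preR X (fun y => U y /\ ~ V y) x).
  + apply clopen_compl, (R_inv_clopen HX), clopen_inter;
      [assumption| apply clopen_compl; assumption].
  + intros x; unfold preR; split.
    * intros H y Hxy Uy; apply NNPP; intros nV; apply H; exists y; auto.
    * intros H [y [Hxy [Uy nVy]]]; apply nVy, H; assumption.
- intros x y Hxy H z Ryz Uz; apply H; [exact (R_down HX Hxy Ryz)|exact Uz].
Qed.

Lemma cu_coimp (U V : Dcar) :
  cu (fun x => exists y, sS X x y /\ (proj1_sig U y /\ ~ proj1_sig V y)).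
Proof.
destruct U as [U [HU1 HU2]], V as [V [HV1 HV2]]; simpl; split.
- exact (@S_inv_clopen _ HX (fun y => U y /\ ~ V y)
      (clopen_inter HU1 (clopen_compl HV1))).
- intros x y Hxy [z [Sxz Hz]]; exists z; split; [exact (S_up HX Hxy Sxz)|exact Hz].
Qed.

Definition Dd : AlgData := {|
  acar := Dcar;
  ameet := fun U V => exist _ _ (cu_meet U V);
  ajoin := fun U V => exist _ _ (cu_join U V);
  aimp := fun U V => exist _ _ (cu_imp U V);
  acoimp := fun U V => exist _ _ (cu_coimp U V);
  abot := exist _ _ cu_bot;
  atop := exist _ _ cu_top |}.

End DualAlg.

Definition XWHBS (A : AlgData) (HX : isWHBS (Xd A)) : WHBSpace :=
  {| wsp := Xd A; wsp_ax := HX |}.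

(* Priestley duality, enriched with the two relations.  By the prime filter
   theorem (Zorn), prime filters separate elements, and every refuted
   implication a -> b and every co-implication a <- b in a prime filter P has a
   witnessing R-, resp. S-successor of P; (E1) and (E2) make S the converse of
   R.  The space X(A) is compact by Alexander's subbase argument, so its clopen
   upsets are finite unions of sets sigma(a), i.e. sigma is onto.  Dually,
   compactness of X together with the Priestley separation axiom shows that
   every prime filter of D(X) is epsilon of a point, and that epsilon reflects
   the order, R and S and maps open sets to open sets. *)

From Stdlib Require Import Classical List ProofIrrelevance FunctionalExtensionality
  PropExtensionality IndefiniteDescription.
From mathcomp Require boolp classical_sets.
Set Implicit Arguments.
Unset Strict Implicit.

Lemma sig_pred_ext (T : Type) (Pr : (T -> Prop) -> Prop) (U V : {P : T -> Prop | Pr P}) :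
  (forall t, proj1_sig U t <-> proj1_sig V t) -> U = V.
Proof.
destruct U as [U HU], V as [V HV]; simpl; intro E.
assert (U = V) as <-
  by (apply functional_extensionality; intro t; apply propositional_extensionality; auto).
f_equal; apply proof_irrelevance.
Qed.

Lemma list_choice_or (I J : Type) (Q : I -> Prop) (R : I -> J -> Prop) (l : list I) :
  (forall i, In i l -> Q i \/ exists j, R i j) ->
  exists l' : list J, (forall j, In j l' -> exists i, R i j) /\
    (forall i, In i l -> Q i \/ exists j, In j l' /\ R i j).
Proof.
induction l as [|i l IH]; intro H.
- exists nil; split; [intros _ []|intros _ []].
- destruct IH as [l' [Hl' Hcov]]; [intros k hk; apply H; right; exact hk|].
  destruct (H i (or_introl eq_refl)) as [Qi|[j Rij]].
  + exists l'; split; [exact Hl'|].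
    intros k [<-|hk]; [left; exact Qi|exact (Hcov k hk)].
  + exists (j :: l'); split.
    * intros j' [<-|hj]; [exists i; exact Rij|exact (Hl' j' hj)].
    * intros k [<-|hk]; [right; exists j; split; [left|]; auto|].
      destruct (Hcov k hk) as [Qk|[j' [hj' Rkj']]]; [left; exact Qk|].
      right; exists j'; split; [right|]; auto.
Qed.

Section Chains.
Variables (T : Type) (C : (T -> Prop) -> Prop).
Hypothesis C_chain :
  forall X Y, C X -> C Y -> (forall t, X t -> Y t) \/ (forall t, Y t -> X t).

Lemma chain_list_bound (X0 : T -> Prop) (l : list T) : C X0 ->
  (forall t, In t l -> exists X, C X /\ X t) ->
  exists X, C X /\ forall t, In t l -> X t.
Proof.
intro CX0; induction l as [|t l IH]; intro H.
- exists X0; split; [exact CX0|intros _ []].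
- destruct IH as [X [CX HX]]; [intros s hs; apply H; right; exact hs|].
  destruct (H t (or_introl eq_refl)) as [Y [CY Yt]].
  destruct (C_chain CX CY) as [XY|YX].
  + exists Y; split; [exact CY|]. intros s [<-|hs]; auto.
  + exists X; split; [exact CX|]. intros s [<-|hs]; auto.
Qed.

End Chains.

Lemma zorn_superset (T : Type) (Pr : (T -> Prop) -> Prop) (X0 : T -> Prop) :
  Pr X0 ->
  (forall C : (T -> Prop) -> Prop, (forall X, C X -> Pr X) -> (exists X, C X) ->
     (forall X Y, C X -> C Y -> (forall t, X t -> Y t) \/ (forall t, Y t -> X t)) ->
     Pr (fun t => exists X, C X /\ X t)) ->
  exists M, Pr M /\ (forall t, X0 t -> M t) /\
     (forall N, Pr N -> (forall t, M t -> N t) -> forall t, N t -> M t).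
Proof.
intros PrX0 Hchain.
set (S := {X : T -> Prop | Pr X /\ forall t, X0 t -> X t}).
set (R := fun X Y : S => boolp.asbool (forall t, proj1_sig X t -> proj1_sig Y t)).
destruct (@classical_sets.ZL_preorder S (exist _ X0 (conj PrX0 (fun t h => h))) R)
  as [[M [PrM X0M]] Mmax].
- intro X; apply boolp.asboolT; auto.
- intros X Y Z XY YZ; apply boolp.asboolT.
  apply boolp.asboolW in XY; apply boolp.asboolW in YZ; auto.
- intros Ch Htot.
  destruct (classic (exists X, Ch X)) as [[X0' ChX0']|Hempty].
  + set (C := fun X => exists Y : S, Ch Y /\ proj1_sig Y = X).
    assert (PrU : Pr (fun t => exists X, C X /\ X t)).
    { apply Hchain.
      - intros X [Y [_ <-]]; exact (proj1 (proj2_sig Y)).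
      - exists (proj1_sig X0'), X0'; auto.
      - intros X Y [X' [ChX <-]] [Y' [ChY <-]].
        destruct (Htot X' Y' ChX ChY) as [h|h]; apply boolp.asboolW in h; auto. }
    assert (X0U : forall t, X0 t -> exists X, C X /\ X t).
    { intros t h; exists (proj1_sig X0'); split; [exists X0'; auto|].
      exact (proj2 (proj2_sig X0') t h). }
    exists (exist (fun X => Pr X /\ forall t, X0 t -> X t) _ (conj PrU X0U)).
    intros Y ChY; apply boolp.asboolT; simpl; intros t h.
    exists (proj1_sig Y); split; [exists Y|]; auto.
  + exists (exist _ X0 (conj PrX0 (fun t h => h))).
    intros Y ChY; exfalso; apply Hempty; exists Y; exact ChY.
- exists M; split; [exact PrM|split; [exact X0M|]].
  intros N PrN MN.
  set (N' := exist (fun X => Pr X /\ forall t, X0 t -> X t) N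
               (conj PrN (fun t h => MN t (X0M t h)))).
  exact (boolp.asboolW (Mmax N' (boolp.asboolT MN))).
Qed.

(** * Distributive lattices and prime filters *)

Record distr_lattice (T : Type) (m j : T -> T -> T) : Prop := {
  dl_meetC : forall a b, m a b = m b a;
  dl_joinC : forall a b, j a b = j b a;
  dl_meetA : forall a b c, m a (m b c) = m (m a b) c;
  dl_joinA : forall a b c, j a (j b c) = j (j a b) c;
  dl_meetKj : forall a b, m a (j a b) = a;
  dl_joinKm : forall a b, j a (m a b) = a;
  dl_meetDj : forall a b c, m a (j b c) = j (m a b) (m a c) }.

Section Lattice.
Variables (T : Type) (m j : T -> T -> T) (L : distr_lattice m j).
Let mC := dl_meetC L.
Let jC := dl_joinC L.
Let mA := dl_meetA L.
Let mK := dl_meetKj L.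
Let jK := dl_joinKm L.
Let mD := dl_meetDj L.

Definition lat_le a b := m a b = a.

Lemma lat_meet_idem a : m a a = a.
Proof. rewrite <- (jK a a) at 2; apply mK. Qed.

Lemma lat_joinDm a b c : j a (m b c) = m (j a b) (j a c).
Proof.
rewrite (mD (j a b) a c), (mC (j a b) a), mK, (mC (j a b) c), mD.
rewrite (dl_joinA L), (mC c a), jK, (mC c b); reflexivity.
Qed.

Lemma distr_lattice_dual : distr_lattice j m.
Proof.
split; [exact jC|exact mC|exact (dl_joinA L)|exact mA|exact jK|exact mK|].
exact lat_joinDm.
Qed.

Lemma lat_le_refl a : lat_le a a.
Proof. apply lat_meet_idem. Qed.

Lemma lat_le_trans a b c : lat_le a b -> lat_le b c -> lat_le a c.
Proof. unfold lat_le; intros ab bc; rewrite <- ab at 1; rewrite <- mA, bc; exact ab. Qed.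

Lemma lat_le_anti a b : lat_le a b -> lat_le b a -> a = b.
Proof. unfold lat_le; intros ab ba; rewrite <- ab, mC; exact ba. Qed.

Lemma lat_le_meetl a b : lat_le (m a b) a.
Proof. unfold lat_le; rewrite (mC (m a b) a), mA, lat_meet_idem; reflexivity. Qed.

Lemma lat_le_meetr a b : lat_le (m a b) b.
Proof. unfold lat_le; rewrite <- mA, lat_meet_idem; reflexivity. Qed.

Lemma lat_le_meet a b c : lat_le c a -> lat_le c b -> lat_le c (m a b).
Proof. unfold lat_le; intros ca cb; rewrite mA, ca, cb; reflexivity. Qed.

Lemma lat_le_joinl a b : lat_le a (j a b).
Proof. apply mK. Qed.

Lemma lat_le_joinr a b : lat_le b (j a b).
Proof. unfold lat_le; rewrite jC; apply mK. Qed.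

Lemma lat_le_join a b c : lat_le a c -> lat_le b c -> lat_le (j a b) c.
Proof. unfold lat_le; intros ac bc; rewrite mC, mD, (mC c a), (mC c b), ac, bc; reflexivity. Qed.

Lemma lat_leEjoin a b : lat_le a b <-> j a b = b.
Proof.
unfold lat_le; split; intro h.
- rewrite <- h, mC, jC, jK; reflexivity.
- rewrite <- h; apply mK.
Qed.

Lemma lat_le_meet2 a a' b b' : lat_le a a' -> lat_le b b' -> lat_le (m a b) (m a' b').
Proof.
intros aa' bb'; apply lat_le_meet.
- exact (lat_le_trans (lat_le_meetl a b) aa').
- exact (lat_le_trans (lat_le_meetr a b) bb').
Qed.

Lemma lat_le_join2 a a' b b' : lat_le a a' -> lat_le b b' -> lat_le (j a b) (j a' b').
Proof.
intros aa' bb'; apply lat_le_join.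
- exact (lat_le_trans aa' (lat_le_joinl a' b')).
- exact (lat_le_trans bb' (lat_le_joinr a' b')).
Qed.

Definition lat_filter (F : T -> Prop) :=
  (forall a b, F a -> F b -> F (m a b)) /\ (forall a b, F a -> lat_le a b -> F b).
Definition lat_ideal (I : T -> Prop) :=
  (forall a b, I a -> I b -> I (j a b)) /\ (forall a b, I b -> lat_le a b -> I a).

Section MaximalFilter.
Variables (I M : T -> Prop) (HI : lat_ideal I) (HM : lat_filter M).
Hypothesis MI : forall x, M x -> ~ I x.

Lemma maximal_filter_prime :
  (forall x, ~ M x -> exists q, M q /\ I (m q x)) -> forall x y, M (j x y) -> M x \/ M y.
Proof.
intros Mesc x y Mxy; apply NNPP; intro hn.
destruct (Mesc x (fun h => hn (or_introl h))) as [q1 [Mq1 I1]].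
destruct (Mesc y (fun h => hn (or_intror h))) as [q2 [Mq2 I2]].
destruct HI as [Ijoin Idown], HM as [Mmeet _].
apply (MI (x := m (m q1 q2) (j x y))); [apply Mmeet; [apply Mmeet|]; assumption|].
rewrite mD; apply Ijoin.
- exact (Idown _ _ I1 (lat_le_meet2 (lat_le_meetl q1 q2) (lat_le_refl x))).
- exact (Idown _ _ I2 (lat_le_meet2 (lat_le_meetr q1 q2) (lat_le_refl y))).
Qed.

(* Otherwise the filter generated by M and x would be a larger filter avoiding I. *)
Lemma maximal_filter_escape (x0 : T) : M x0 ->
  (forall N, lat_filter N /\ (forall x, N x -> ~ I x) ->
     (forall x, M x -> N x) -> forall x, N x -> M x) ->
  forall x, ~ M x -> exists q, M q /\ I (m q x).
Proof.
intros Mx0 Mmax x nMx; apply NNPP; intro hn.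
destruct HI as [_ Idown], HM as [Mmeet Mup].
set (N := fun z => exists q, M q /\ lat_le (m q x) z).
apply nMx, (Mmax N); [split; [split|]| |].
- intros a b [q [Mq qa]] [q' [Mq' q'b]]; exists (m q q'); split; [apply Mmeet; auto|].
  apply lat_le_meet.
  + exact (lat_le_trans (lat_le_meet2 (lat_le_meetl q q') (lat_le_refl x)) qa).
  + exact (lat_le_trans (lat_le_meet2 (lat_le_meetr q q') (lat_le_refl x)) q'b).
- intros a b [q [Mq qa]] ab; exists q; split; [exact Mq|exact (lat_le_trans qa ab)].
- intros z [q [Mq qz]] Iz; apply hn; exists q; split; [exact Mq|exact (Idown _ _ Iz qz)].
- intros t Mt; exists t; split; [exact Mt|apply lat_le_meetl].
- exists x0; split; [exact Mx0|apply lat_le_meetr].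
Qed.

End MaximalFilter.

Lemma prime_filter_avoiding_ideal (F I : T -> Prop) :
  (exists x, F x) -> lat_filter F -> lat_ideal I -> (forall x, F x -> ~ I x) ->
  exists Q, (forall x, F x -> Q x) /\ lat_filter Q /\ (forall x, Q x -> ~ I x) /\
    (forall x y, Q (j x y) -> Q x \/ Q y) /\
    (forall x, ~ Q x -> exists q, Q q /\ I (m q x)).
Proof.
intros [x0 Fx0] HF HI FI.
destruct (@zorn_superset T (fun Q => lat_filter Q /\ forall x, Q x -> ~ I x) F)
  as [M [[HM MI] [FM Mmax]]].
- split; assumption.
- intros C HC [X0 CX0] Hch; split; [split|].
  + intros a b [X [CX Xa]] [Y [CY Yb]].
    destruct (Hch X Y CX CY) as [h|h].
    * exists Y; split; [exact CY|]. apply (proj1 (proj1 (HC Y CY))); auto.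
    * exists X; split; [exact CX|]. apply (proj1 (proj1 (HC X CX))); auto.
  + intros a b [X [CX Xa]] ab; exists X; split; [exact CX|].
    exact (proj2 (proj1 (HC X CX)) a b Xa ab).
  + intros x [X [CX Xx]]; exact (proj2 (HC X CX) x Xx).
- pose proof (maximal_filter_escape HI HM (FM x0 Fx0) Mmax) as Mesc.
  exists M; split; [exact FM|split; [exact HM|split; [exact MI|split; [|exact Mesc]]]].
  exact (maximal_filter_prime HI HM MI Mesc).
Qed.

End Lattice.

Lemma lat_le_dual (T : Type) (m j : T -> T -> T) (L : distr_lattice m j) (a b : T) :
  lat_le j a b <-> lat_le m b a.
Proof. unfold lat_le at 1; rewrite (dl_joinC L), <- (lat_leEjoin L); tauto. Qed.

(** * WHB-algebras: separation by prime filters *)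

Section WHBAlgebra.
Variables (A : AlgData) (HA : isWHB A).
Local Notation mt := (ameet A).
Local Notation jn := (ajoin A).
Local Notation im := (aimp A).
Local Notation ci := (acoimp A).
Local Notation bt := (abot A).
Local Notation tp := (atop A).
Implicit Types a b c x y q : A.

Lemma whb_lattice : distr_lattice mt jn.
Proof. destruct HA; split; assumption. Qed.

Lemma ale_refl a : ale a a. Proof. exact (lat_le_refl whb_lattice a). Qed.
Lemma ale_trans a b c : ale a b -> ale b c -> ale a c.
Proof. exact (@lat_le_trans _ _ _ whb_lattice a b c). Qed.
Lemma ale_anti a b : ale a b -> ale b a -> a = b.
Proof. exact (@lat_le_anti _ _ _ whb_lattice a b). Qed.
Lemma ale_meetl a b : ale (mt a b) a. Proof. exact (lat_le_meetl whb_lattice a b). Qed.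
Lemma ale_meetr a b : ale (mt a b) b. Proof. exact (lat_le_meetr whb_lattice a b). Qed.
Lemma ale_meet a b c : ale c a -> ale c b -> ale c (mt a b).
Proof. exact (@lat_le_meet _ _ _ whb_lattice a b c). Qed.
Lemma ale_joinl a b : ale a (jn a b). Proof. exact (lat_le_joinl whb_lattice a b). Qed.
Lemma ale_joinr a b : ale b (jn a b). Proof. exact (lat_le_joinr whb_lattice a b). Qed.
Lemma ale_join a b c : ale a c -> ale b c -> ale (jn a b) c.
Proof. exact (@lat_le_join _ _ _ whb_lattice a b c). Qed.
Lemma ale_meet2 a a' b b' : ale a a' -> ale b b' -> ale (mt a b) (mt a' b').
Proof. exact (@lat_le_meet2 _ _ _ whb_lattice a a' b b'). Qed.
Lemma ale_join2 a a' b b' : ale a a' -> ale b b' -> ale (jn a b) (jn a' b').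
Proof. exact (@lat_le_join2 _ _ _ whb_lattice a a' b b'). Qed.
Lemma ale_top a : ale a tp. Proof. apply (meet1 HA). Qed.
Lemma ale_bot a : ale bt a.
Proof. apply (lat_leEjoin whb_lattice); rewrite (joinC HA); apply (join0 HA). Qed.
Lemma top_meet a : mt tp a = a. Proof. rewrite (meetC HA); apply (meet1 HA). Qed.
Lemma bot_join a : jn bt a = a. Proof. rewrite (joinC HA); apply (join0 HA). Qed.

Lemma imp_top_of_le a b : ale a b -> im a b = tp.
Proof.
intro ab.
assert (e : im a (mt a b) = im a a) by (rewrite ab; reflexivity).
rewrite (imp_meet HA), (imp_refl HA), top_meet in e; exact e.
Qed.

Lemma imp_le_imp a a' b b' : ale a' a -> ale b b' -> ale (im a b) (im a' b').
Proof.
intros a'a bb'; apply ale_trans with (im a' b).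
- apply (lat_leEjoin whb_lattice) in a'a.
  unfold ale; rewrite <- (imp_join HA), (joinC HA), a'a; reflexivity.
- unfold ale in *; rewrite <- (imp_meet HA), bb'; reflexivity.
Qed.

Lemma coimp_bot_of_le a b : ale a b -> ci a b = bt.
Proof.
intro ab; apply (lat_leEjoin whb_lattice) in ab.
assert (e : ci (jn a b) b = ci b b) by (rewrite ab; reflexivity).
rewrite (coimp_join HA), (coimp_refl HA), (join0 HA) in e; exact e.
Qed.

Lemma coimp_le_coimp a a' b b' : ale a a' -> ale b' b -> ale (ci a b) (ci a' b').
Proof.
intros aa' b'b; apply ale_trans with (ci a' b).
- apply (lat_leEjoin whb_lattice) in aa'.
  apply (lat_leEjoin whb_lattice); rewrite <- (coimp_join HA), aa'; reflexivity.
- apply (lat_leEjoin whb_lattice); unfold ale in b'b.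
  rewrite <- (coimp_meet HA), (meetC HA), b'b; reflexivity.
Qed.

Section PrimeFilter.
Variables (P : A -> Prop) (HP : prime_filter P).

Lemma pf_meetE a b : P (mt a b) -> P a /\ P b.
Proof. intro h; split; apply (pf_up HP) with (mt a b); auto; [apply ale_meetl|apply ale_meetr]. Qed.

Lemma pf_joinI a b : P a \/ P b -> P (jn a b).
Proof. intros [h|h]; eapply (pf_up HP); eauto; [apply ale_joinl|apply ale_joinr]. Qed.

End PrimeFilter.

Definition lmeet (l : list A) : A := fold_right mt tp l.
Definition ljoin (l : list A) : A := fold_right jn bt l.

Lemma lmeet_app l1 l2 : lmeet (l1 ++ l2) = mt (lmeet l1) (lmeet l2).
Proof.
induction l1 as [|a l1 IH]; simpl; [rewrite top_meet; reflexivity|].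
rewrite IH, (meetA HA); reflexivity.
Qed.

Lemma ljoin_app l1 l2 : ljoin (l1 ++ l2) = jn (ljoin l1) (ljoin l2).
Proof.
induction l1 as [|a l1 IH]; simpl; [rewrite bot_join; reflexivity|].
rewrite IH, (joinA HA); reflexivity.
Qed.

Lemma pf_lmeet (P : A -> Prop) (l : list A) : prime_filter P ->
  P (lmeet l) <-> forall a, In a l -> P a.
Proof.
intro HP; induction l as [|a l IH]; simpl.
- split; [intros _ _ []|intros _; apply (pf_top HP)].
- split.
  + intros h b [<-|hb]; destruct (pf_meetE HP h) as [Pa Pl]; [exact Pa|].
    exact (proj1 IH Pl b hb).
  + intro h; apply (pf_meet HP); [apply h; left; reflexivity|].
    apply IH; intros b hb; apply h; right; exact hb.
Qed.

Lemma pf_ljoin (P : A -> Prop) (l : list A) : prime_filter P ->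
  P (ljoin l) <-> exists a, In a l /\ P a.
Proof.
intro HP; induction l as [|a l IH]; simpl.
- split; [intro h; destruct (pf_proper HP h)|intros [b [[] _]]].
- split.
  + intro h; destruct (pf_prime HP h) as [Pa|Pl]; [exists a; auto|].
    destruct (proj1 IH Pl) as [b [hb Pb]]; exists b; auto.
  + intros [b [[<-|hb] Pb]]; apply (pf_joinI HP); [left; exact Pb|].
    right; apply IH; exists b; auto.
Qed.

Lemma pf_list_bounds (P : A -> Prop) (l : list A) : prime_filter P ->
  exists u v, P u /\ ~ P v /\
    forall a, In a l -> (P a -> ale u a) /\ (~ P a -> ale a v).
Proof.
intro HP; induction l as [|a l IH].
- exists tp, bt; split; [apply (pf_top HP)|split; [apply (pf_proper HP)|intros _ []]].
- destruct IH as [u [v [Pu [nPv Hl]]]]; destruct (classic (P a)) as [Pa|nPa].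
  + exists (mt u a), v; split; [apply (pf_meet HP); assumption|split; [exact nPv|]].
    intros b [<-|hb]; [split; [intros _; apply ale_meetr|tauto]|].
    split; [intro Pb; exact (ale_trans (ale_meetl u a) (proj1 (Hl b hb) Pb))|apply (Hl b hb)].
  + exists u, (jn v a); split; [exact Pu|split].
    * intro h; destruct (pf_prime HP h); contradiction.
    * intros b [<-|hb]; [split; [tauto|intros _; apply ale_joinr]|].
      split; [apply (Hl b hb)|intro nPb; exact (ale_trans (proj2 (Hl b hb) nPb) (ale_joinl v a))].
Qed.

Lemma principal_filter a : lat_filter mt (ale a).
Proof. split; [intros x y; apply ale_meet|intros x y; apply ale_trans]. Qed.

Lemma principal_ideal b : lat_ideal mt jn (fun x => ale x b).
Proof. split; [intros x y; apply ale_join|intros x y xb yx; exact (ale_trans yx xb)]. Qed.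

Lemma prime_filter_separation (F I : A -> Prop) :
  (exists x, F x) -> lat_filter mt F -> (exists x, I x) -> lat_ideal mt jn I ->
  (forall x, F x -> ~ I x) ->
  exists Q, prime_filter Q /\ (forall x, F x -> Q x) /\ (forall x, Q x -> ~ I x) /\
    (forall x, ~ Q x -> exists q, Q q /\ I (mt q x)).
Proof.
intros [x0 Fx0] HF [y0 Iy0] HI FI.
destruct (prime_filter_avoiding_ideal whb_lattice (ex_intro _ x0 Fx0) HF HI FI)
  as [Q [FQ [[Qmeet Qup] [QI [Qprime Qmax]]]]].
exists Q; repeat split; try assumption.
- exact (Qup x0 tp (FQ x0 Fx0) (ale_top x0)).
- intro Qbot; exact (QI bt Qbot (proj2 HI bt y0 Iy0 (ale_bot y0))).
Qed.

Lemma ale_separation a b : ~ ale a b -> exists P, prime_filter P /\ P a /\ ~ P b.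
Proof.
intro nab.
destruct (@prime_filter_separation (ale a) (fun x => ale x b) (ex_intro _ a (ale_refl a)) (principal_filter a)
  (ex_intro (fun x => ale x b) b (ale_refl b)) (principal_ideal b)) as [P [HP [aP [Pb _]]]].
- intros x ax xb; exact (nab (ale_trans ax xb)).
- exists P; split; [exact HP|split; [exact (aP a (ale_refl a))|]].
  intro h; exact (Pb b h (ale_refl b)).
Qed.

Definition R_succ (P Q : A -> Prop) := forall a b, P (im a b) -> Q a -> Q b.
Definition S_succ (P Q : A -> Prop) := forall a b, Q a -> ~ Q b -> P (ci a b).

(* The witness ideal is the set of x with x -> c in P for some c in I0. *)
Lemma exists_R_successor (P F0 I0 : A -> Prop) : prime_filter P ->
  (exists x, F0 x) -> lat_filter mt F0 -> (exists c, I0 c) -> lat_ideal mt jn I0 ->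
  (forall x c, F0 x -> I0 c -> ~ P (im x c)) ->
  exists Q, prime_filter Q /\ (forall x, F0 x -> Q x) /\ (forall c, Q c -> ~ I0 c) /\
    R_succ P Q.
Proof.
intros HP HF0 F0filt [c0 Ic0] [Ijoin Idown] Hdisj.
set (J := fun x => exists c, I0 c /\ P (im x c)).
assert (I0J : forall c, I0 c -> J c).
{ intros c Ic; exists c; split; [exact Ic|]. rewrite (imp_refl HA); apply (pf_top HP). }
assert (Jideal : lat_ideal mt jn J).
{ split.
  - intros x y [c [Ic Pxc]] [c' [Ic' Pyc']].
    exists (jn c c'); split; [apply Ijoin; assumption|].
    rewrite (imp_join HA); apply (pf_meet HP).
    + apply (pf_up HP) with (im x c); [exact Pxc|].
      apply imp_le_imp; [apply ale_refl|apply ale_joinl].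
    + apply (pf_up HP) with (im y c'); [exact Pyc'|].
      apply imp_le_imp; [apply ale_refl|apply ale_joinr].
  - intros x y [c [Ic Pyc]] xy; exists c; split; [exact Ic|].
    apply (pf_up HP) with (im y c); [exact Pyc|apply imp_le_imp; [exact xy|apply ale_refl]]. }
assert (Jback : forall x y, J y -> P (im x y) -> J x).
{ intros x y [c [Ic Pyc]] Pxy; exists c; split; [exact Ic|].
  apply (pf_up HP) with (mt (im x y) (im y c)); [apply (pf_meet HP); assumption|].
  apply (imp_trans HA). }
destruct (prime_filter_separation HF0 F0filt (ex_intro _ c0 (I0J c0 Ic0)) Jideal)
  as [Q [HQ [F0Q [QJ Qmax]]]].
{ intros x Fx [c [Ic Pxc]]; exact (Hdisj x c Fx Ic Pxc). }
exists Q; split; [exact HQ|split; [exact F0Q|split]].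
- intros c Qc Ic; exact (QJ c Qc (I0J c Ic)).
- intros a b Pab Qa; apply NNPP; intro nQb.
  destruct (Qmax b nQb) as [q [Qq Jqb]].
  apply (QJ (mt q a)); [apply (pf_meet HQ); assumption|].
  apply (Jback _ _ Jqb).
  rewrite (imp_meet HA); apply (pf_meet HP).
  + rewrite imp_top_of_le; [apply (pf_top HP)|apply ale_meetl].
  + apply (pf_up HP) with (im a b); [exact Pab|].
    apply imp_le_imp; [apply ale_meetr|apply ale_refl].
Qed.

Lemma coimp_refuted_filter (P F0 : A -> Prop) : prime_filter P -> lat_filter mt F0 ->
  lat_filter mt (fun y => exists x, F0 x /\ ~ P (ci x y)).
Proof.
intros HP [Fmeet Fup]; split.
- intros y y' [x [Fx nPxy]] [x' [Fx' nPxy']].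
  exists (mt x x'); split; [apply Fmeet; assumption|].
  rewrite (coimp_meet HA); intro h; destruct (pf_prime HP h) as [h'|h'].
  + apply nPxy, (pf_up HP) with (ci (mt x x') y); [exact h'|].
    apply coimp_le_coimp; [apply ale_meetl|apply ale_refl].
  + apply nPxy', (pf_up HP) with (ci (mt x x') y'); [exact h'|].
    apply coimp_le_coimp; [apply ale_meetr|apply ale_refl].
- intros y y' [x [Fx nPxy]] yy'; exists x; split; [exact Fx|].
  intro h; apply nPxy, (pf_up HP) with (ci x y'); [exact h|].
  apply coimp_le_coimp; [apply ale_refl|exact yy'].
Qed.

(* Dually to the R case: a maximal ideal extending I0 and avoiding the filter
   of those y with x <- y outside P for some x in F0; Q is its complement. *)
Lemma exists_S_successor (P F0 I0 : A -> Prop) : prime_filter P ->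
  (exists x, F0 x) -> lat_filter mt F0 -> (exists c, I0 c) -> lat_ideal mt jn I0 ->
  (forall x c, F0 x -> I0 c -> P (ci x c)) ->
  exists Q, prime_filter Q /\ (forall x, F0 x -> Q x) /\ (forall c, Q c -> ~ I0 c) /\
    S_succ P Q.
Proof.
intros HP [x0 Fx0] F0filt [c0 Ic0] [Ijoin Idown] Hdisj.
set (G := fun y => exists x, F0 x /\ ~ P (ci x y)).
destruct (coimp_refuted_filter HP F0filt) as [Gmeet Gup].
assert (F0G : forall x, F0 x -> G x).
{ intros x Fx; exists x; split; [exact Fx|]. rewrite (coimp_refl HA); apply (pf_proper HP). }
destruct (@prime_filter_avoiding_ideal _ _ _ (distr_lattice_dual whb_lattice) I0 G)
  as [J [I0J [[Jjoin Jdown] [JG [Jprime Jmax]]]]].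
- exists c0; exact Ic0.
- split; [exact Ijoin|intros a b Ia ab; exact (Idown b a Ia (proj1 (lat_le_dual whb_lattice a b) ab))].
- split; [exact Gmeet|intros a b Gb ab; exact (Gup b a Gb (proj1 (lat_le_dual whb_lattice a b) ab))].
- intros c Ic [x [Fx nPxc]]; exact (nPxc (Hdisj x c Fx Ic)).
- assert (Jdown' : forall a b, J b -> ale a b -> J a).
  { intros a b Jb ab; apply (Jdown b a Jb), (lat_le_dual whb_lattice), ab. }
  exists (fun x => ~ J x); split; [split|split; [|split]].
  + intro Jtop; apply (JG tp Jtop), (Gup x0 tp (F0G x0 Fx0) (ale_top x0)).
  + intros a b nJa nJb Jab; destruct (Jprime a b Jab); auto.
  + intros a b nJa ab Jb; exact (nJa (Jdown' a b Jb ab)).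
  + intro nJbot; exact (nJbot (Jdown' bt c0 (I0J c0 Ic0) (ale_bot c0))).
  + intros a b nJab; apply NNPP; intro h; apply nJab, Jjoin; apply NNPP; tauto.
  + intros x Fx Jx; exact (JG x Jx (F0G x Fx)).
  + intros c nJc Ic; exact (nJc (I0J c Ic)).
  + intros a b nJa nnJb; apply NNPP; intro nPab.
    destruct (Jmax a nJa) as [q [Jq Gqa]]; destruct Gqa as [x [Fx nPx]].
    apply (JG (jn q b)); [apply Jjoin; [exact Jq|exact (NNPP _ nnJb)]|].
    exists x; split; [exact Fx|intro Pxqb].
    pose proof (pf_up HP Pxqb (coimp_trans HA x (jn q a) (jn q b))) as h.
    rewrite (coimp_join HA), (coimp_bot_of_le (ale_joinl q b)), bot_join in h.
    destruct (pf_prime HP h) as [h'|h']; [exact (nPx h')|].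
    apply nPab, (pf_up HP) with (ci a (jn q b)); [exact h'|].
    apply coimp_le_coimp; [apply ale_refl|apply ale_joinr].
Qed.

Lemma R_succ_witness (P : A -> Prop) a b : prime_filter P -> ~ P (im a b) ->
  exists Q, prime_filter Q /\ R_succ P Q /\ Q a /\ ~ Q b.
Proof.
intros HP nPab.
destruct (@exists_R_successor P (ale a) (fun x => ale x b) HP (ex_intro _ a (ale_refl a)) (principal_filter a)
  (ex_intro (fun x => ale x b) b (ale_refl b)) (principal_ideal b)) as [Q [HQ [aQ [Qb RPQ]]]].
- intros x c ax cb Pxc; apply nPab, (pf_up HP) with (im x c); [exact Pxc|].
  apply imp_le_imp; assumption.
- exists Q; split; [exact HQ|split; [exact RPQ|split; [exact (aQ a (ale_refl a))|]]].
  intro h; exact (Qb b h (ale_refl b)).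
Qed.

Lemma S_succ_witness (P : A -> Prop) a b : prime_filter P -> P (ci a b) ->
  exists Q, prime_filter Q /\ S_succ P Q /\ Q a /\ ~ Q b.
Proof.
intros HP Pab.
destruct (@exists_S_successor P (ale a) (fun x => ale x b) HP (ex_intro _ a (ale_refl a)) (principal_filter a)
  (ex_intro (fun x => ale x b) b (ale_refl b)) (principal_ideal b)) as [Q [HQ [aQ [Qb SPQ]]]].
- intros x c ax cb; apply (pf_up HP) with (ci a b); [exact Pab|].
  apply coimp_le_coimp; assumption.
- exists Q; split; [exact HQ|split; [exact SPQ|split; [exact (aQ a (ale_refl a))|]]].
  intro h; exact (Qb b h (ale_refl b)).
Qed.

End WHBAlgebra.

(** * Clopen sets and compactness *)

Section SpaceTopology.
Variables (X : SpData) (HT : is_topology (opens X)).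

Lemma sp_open_union2 (U V : pt X -> Prop) :
  opens X U -> opens X V -> opens X (fun x => U x \/ V x).
Proof.
intros HU HV.
apply (top_ext HT (top_union HT (F := fun W => W = U \/ W = V) ltac:(intros W [->| ->]; assumption))).
intros x; split.
- intros [W [[-> | ->] Wx]]; [left|right]; exact Wx.
- intros [Ux|Vx]; [exists U|exists V]; auto.
Qed.

Lemma sp_clopen_ext (U V : pt X -> Prop) :
  clopen X U -> (forall x, U x <-> V x) -> clopen X V.
Proof.
intros [Uo Uc] E; split; [exact (top_ext HT Uo E)|].
apply (top_ext HT Uc); intro x; rewrite (E x); tauto.
Qed.

Lemma sp_clopen_compl (U : pt X -> Prop) : clopen X U -> clopen X (fun x => ~ U x).
Proof.
intros [Uo Uc]; split; [exact Uc|].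
apply (top_ext HT Uo); intro x; split; [tauto|apply NNPP].
Qed.

Lemma sp_clopen_inter (U V : pt X -> Prop) :
  clopen X U -> clopen X V -> clopen X (fun x => U x /\ V x).
Proof.
intros [Uo Uc] [Vo Vc]; split; [exact (top_inter HT Uo Vo)|].
apply (top_ext HT (sp_open_union2 Uc Vc)); intro x; split; [tauto|].
intro h; destruct (classic (U x)); [right|left]; tauto.
Qed.

Lemma sp_clopen_union (U V : pt X -> Prop) :
  clopen X U -> clopen X V -> clopen X (fun x => U x \/ V x).
Proof.
intros HU HV.
apply sp_clopen_ext with (fun x => ~ (~ U x /\ ~ V x)).
- apply sp_clopen_compl, sp_clopen_inter; apply sp_clopen_compl; assumption.
- intro x; split; [|tauto]. intro h; destruct (classic (U x)); [left|right]; tauto.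
Qed.

Lemma sp_clopen_list_union (I : Type) (l : list I) (f : I -> pt X -> Prop) :
  (forall i, In i l -> clopen X (f i)) -> clopen X (fun x => exists i, In i l /\ f i x).
Proof.
induction l as [|i l IH]; intro H.
- apply sp_clopen_ext with (fun _ => False).
  + split; [exact (top_empty HT)|apply (top_ext HT (top_full HT)); tauto].
  + intro x; split; [tauto|intros [i [[] _]]].
- apply sp_clopen_ext with (fun x => f i x \/ exists i', In i' l /\ f i' x).
  + apply sp_clopen_union; [apply H; left; reflexivity|].
    apply IH; intros i' hi'; apply H; right; exact hi'.
  + intro x; split.
    * intros [h|[i' [hi' h]]]; [exists i|exists i']; split; auto; [left|right]; auto.
    * intros [i' [[<-|hi'] h]]; [left; exact h|right; exists i'; auto].
Qed.

Lemma finite_subcover (HC : compact (opens X)) (C : pt X -> Prop) (I : Type)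
  (V : I -> pt X -> Prop) :
  opens X (fun x => ~ C x) -> (forall i, opens X (V i)) ->
  (forall x, C x -> exists i, V i x) ->
  exists l : list I, forall x, C x -> exists i, In i l /\ V i x.
Proof.
intros Cc HV Hcov.
set (F := fun U => (exists i, forall x, U x <-> V i x) \/ (forall x, U x <-> ~ C x)).
destruct (HC F) as [l [lF lcov]].
- intros U [[i E]|E]; [apply (top_ext HT (HV i))|apply (top_ext HT Cc)];
    intro x; rewrite (E x); tauto.
- intro x; destruct (classic (C x)) as [Cx|nCx].
  + destruct (Hcov x Cx) as [i Vix]; exists (V i); split; [left; exists i|]; tauto.
  + exists (fun x => ~ C x); split; [right|]; tauto.
- destruct (@list_choice_or _ I (fun U => forall x, U x <-> ~ C x)
    (fun U i => forall x, U x -> V i x) l) as [l' [_ Hl']].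
  + intros U hU; destruct (lF U hU) as [[i E]|E]; [right; exists i; apply E|left; exact E].
  + exists l'; intros x Cx; destruct (lcov x) as [U [hU Ux]].
    destruct (Hl' U hU) as [E|[i [hi UVi]]]; [exfalso; exact (proj1 (E x) Ux Cx)|].
    exists i; auto.
Qed.

End SpaceTopology.

Lemma is_topology_preimage (S T : Type) (O : (S -> Prop) -> Prop) (f : S -> T) :
  is_topology O -> is_topology (fun V : T -> Prop => O (fun s => V (f s))).
Proof.
intro HO; split.
- intros U V HU E; apply (top_ext HO HU); intro s; apply E.
- exact (top_empty HO).
- exact (top_full HO).
- intros U V HU HV; exact (top_inter HO HU HV).
- intros F HF.
  apply (top_ext HO (top_union HO (F := fun W => exists V, F V /\ forall s, W s <-> V (f s))
    ltac:(intros W [V [FV E]]; exact (top_ext HO (HF V FV) (fun s => iff_sym (E s)))))).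
  intro s; split.
  + intros [W [[V [FV E]] Ws]]; exists V; split; [exact FV|apply E, Ws].
  + intros [V [FV Vfs]]; exists (fun s => V (f s)); split; [exists V; split; [exact FV|tauto]|exact Vfs].
Qed.

(** * The dual space X(A) *)

Lemma gen_opens_topology (A : AlgData) : is_topology (@gen_opens A).
Proof.
split.
- intros U V HU E O HO Hs; exact (top_ext HO (HU O HO Hs) E).
- intros O HO _; exact (top_empty HO).
- intros O HO _; exact (top_full HO).
- intros U V HU HV O HO Hs; exact (top_inter HO (HU O HO Hs) (HV O HO Hs)).
- intros F HF O HO Hs; apply (top_union HO); intros U FU; exact (HF U FU O HO Hs).
Qed.

Lemma continuous_into_Xd (Y : SpData) (A : AlgData) (f : pt Y -> PF A) :
  is_topology (opens Y) ->
  (forall a, opens Y (fun y => proj1_sig (f y) a)) ->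
  (forall a, opens Y (fun y => ~ proj1_sig (f y) a)) ->
  forall U, gen_opens U -> opens Y (fun y => U (f y)).
Proof.
intros HT Hs Hc U HU; apply (HU _ (is_topology_preimage f HT)).
intros W [[a E]|[a E]]; [apply (top_ext HT (Hs a))|apply (top_ext HT (Hc a))];
  intro y; rewrite (E (f y)); tauto.
Qed.

Section DualSpace.
Variables (A : AlgData) (HA : isWHB A).
Local Notation mt := (ameet A).
Local Notation jn := (ajoin A).
Local Notation im := (aimp A).
Local Notation ci := (acoimp A).
Local Notation bt := (abot A).
Local Notation tp := (atop A).
Implicit Types a b c x y : A.

Let HT : is_topology (opens (Xd A)) := gen_opens_topology A.

Lemma sigma_open a : gen_opens (fun P : PF A => proj1_sig P a).
Proof. intros O HO Hs; apply Hs; left; exists a; tauto. Qed.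

Lemma sigma_compl_open a : gen_opens (fun P : PF A => ~ proj1_sig P a).
Proof. intros O HO Hs; apply Hs; right; exists a; tauto. Qed.

Lemma sigma_clopen a : clopen (Xd A) (fun P : PF A => proj1_sig P a).
Proof. split; [apply sigma_open|apply sigma_compl_open]. Qed.

Definition in_basic (P : PF A) (p : A * A) := proj1_sig P (fst p) /\ ~ proj1_sig P (snd p).

Lemma basic_open p : gen_opens (fun P => in_basic P p).
Proof. apply (top_inter HT); [apply sigma_open|apply sigma_compl_open]. Qed.

Lemma gen_open_basic_nbhd (V : PF A -> Prop) : gen_opens V ->
  forall P, V P -> exists p, in_basic P p /\ forall Q, in_basic Q p -> V Q.
Proof.
intro HV; apply HV.
- split.
  + intros U W HU E P WP; apply E in WP; destruct (HU P WP) as [p [Pp pU]].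
    exists p; split; [exact Pp|intros Q Qp; apply E, pU, Qp].
  + intros P [].
  + intros P _; exists (tp, bt); split; [|intros; exact I].
    split; [apply (pf_top (proj2_sig P))|apply (pf_proper (proj2_sig P))].
  + intros U W HU HW P [UP WP].
    destruct (HU P UP) as [[a b] [[Pa nPb] abU]], (HW P WP) as [[a' b'] [[Pa' nPb'] abW]].
    exists (mt a a', jn b b'); split; [split; simpl|].
    * apply (pf_meet (proj2_sig P)); assumption.
    * intro h; destruct (pf_prime (proj2_sig P) h); auto.
    * intros Q [Qaa' nQbb']; simpl in Qaa', nQbb'.
      destruct (pf_meetE HA (proj2_sig Q) Qaa') as [Qa Qa'].
      split; [apply abU|apply abW]; split; simpl; auto;
        intro h; apply nQbb', (pf_joinI HA (proj2_sig Q)); auto.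
  + intros F HF P [U [FU UP]]; destruct (HF U FU P UP) as [p [Pp pU]].
    exists p; split; [exact Pp|intros Q Qp; exists U; auto].
- intros W [[a E]|[a E]] P WP.
  + exists (a, bt); split; [split; [apply E, WP|apply (pf_proper (proj2_sig P))]|].
    intros Q [Qa _]; apply E, Qa.
  + exists (tp, a); split; [split; [apply (pf_top (proj2_sig P))|apply E, WP]|].
    intros Q [_ nQa]; apply E, nQa.
Qed.

Lemma basic_union_open (Cnd : A * A -> Prop) :
  gen_opens (fun Q => exists p, Cnd p /\ in_basic Q p).
Proof.
apply (top_ext HT (top_union HT (F := fun V => exists p, Cnd p /\ forall Q, V Q <-> in_basic Q p)
  ltac:(intros V [p [_ E]]; exact (top_ext HT (basic_open p) (fun Q => iff_sym (E Q)))))).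
intro Q; split.
- intros [V [[p [Cp E]] VQ]]; exists p; split; [exact Cp|apply E, VQ].
- intros [p [Cp Qp]]; exists (fun Q => in_basic Q p); split; [exists p; split; [exact Cp|tauto]|exact Qp].
Qed.

Definition covers (l : list (A * A)) := forall P, exists p, In p l /\ in_basic P p.
Definition no_finite_cover (M : A * A -> Prop) :=
  forall l, (forall p, In p l -> M p) -> ~ covers l.

(* Otherwise the filter generated by Sb and the ideal generated by Sa are
   disjoint, and a prime filter separating them is covered by neither. *)
Lemma subbasic_cover_finite (Sa Sb : A -> Prop) :
  (forall P : PF A, (exists a, Sa a /\ proj1_sig P a) \/ (exists b, Sb b /\ ~ proj1_sig P b)) ->
  exists la lb, (forall a, In a la -> Sa a) /\ (forall b, In b lb -> Sb b) /\
    ale (lmeet lb) (ljoin la).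
Proof.
intro Hcov; apply NNPP; intro hn.
set (G := fun x => exists lb, (forall b, In b lb -> Sb b) /\ ale (lmeet lb) x).
set (I := fun x => exists la, (forall a, In a la -> Sa a) /\ ale x (ljoin la)).
destruct (@prime_filter_separation A HA G I) as [Q [HQ [GQ [QI _]]]].
- exists tp, nil; split; [intros _ []|apply (ale_refl HA)].
- split.
  + intros x y [l1 [h1 le1]] [l2 [h2 le2]]; exists (l1 ++ l2); split.
    * intros b hb; apply in_app_iff in hb; destruct hb; auto.
    * rewrite (lmeet_app HA); apply (ale_meet2 HA); assumption.
  + intros x y [l [h le]] xy; exists l; split; [exact h|exact (ale_trans HA le xy)].
- exists bt, nil; split; [intros _ []|apply (ale_refl HA)].
- split.
  + intros x y [l1 [h1 le1]] [l2 [h2 le2]]; exists (l1 ++ l2); split.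
    * intros a ha; apply in_app_iff in ha; destruct ha; auto.
    * rewrite (ljoin_app HA); apply (ale_join2 HA); assumption.
  + intros x y [l [h le]] xy; exists l; split; [exact h|exact (ale_trans HA xy le)].
- intros x [lb [hb le1]] [la [ha le2]]; apply hn.
  exists la, lb; split; [exact ha|split; [exact hb|exact (ale_trans HA le1 le2)]].
- destruct (Hcov (exist _ Q HQ)) as [[a [Sa' Qa]]|[b [Sb' nQb]]]; simpl in *.
  + apply (QI a Qa); exists (a :: nil); split; [intros a' [<-|[]]; exact Sa'|apply (ale_joinl HA)].
  + apply nQb, GQ; exists (b :: nil); split; [intros b' [<-|[]]; exact Sb'|apply (ale_meetl HA)].
Qed.

Lemma no_finite_cover_subbasic (M : A * A -> Prop) : no_finite_cover M ->
  ~ forall P : PF A,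
      (exists a, M (a, bt) /\ proj1_sig P a) \/ (exists b, M (tp, b) /\ ~ proj1_sig P b).
Proof.
intros HM Hcov; destruct (subbasic_cover_finite Hcov) as [la [lb [Hla [Hlb le]]]].
apply HM with (map (fun b => (tp, b)) lb ++ map (fun a => (a, bt)) la).
- intros p hp; apply in_app_iff in hp.
  destruct hp as [hp|hp]; apply in_map_iff in hp; destruct hp as [c [<- hc]]; auto.
- intro P; destruct (classic (forall b, In b lb -> proj1_sig P b)) as [all|nall].
  + assert (Pla : proj1_sig P (ljoin la)).
    { apply (pf_up (proj2_sig P)) with (lmeet lb); [|exact le].
      apply (pf_lmeet HA lb (proj2_sig P)), all. }
    destruct (proj1 (pf_ljoin HA la (proj2_sig P)) Pla) as [a [ha Pa]].
    exists (a, bt); split; [apply in_app_iff; right; apply in_map_iff; exists a; auto|].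
    split; [exact Pa|apply (pf_proper (proj2_sig P))].
  + apply not_all_ex_not in nall; destruct nall as [b nb]; apply imply_to_and in nb.
    exists (tp, b); split; [apply in_app_iff; left; apply in_map_iff; exists b; tauto|].
    split; [apply (pf_top (proj2_sig P))|tauto].
Qed.

(* Alexander's subbase argument: in a maximal family without finite subcover,
   every basic member [a, not b] can be traded for a subbasic one. *)
Section MaximalNoFiniteCover.
Variables (M : A * A -> Prop) (HM : no_finite_cover M).
Hypothesis Mmax :
  forall N, no_finite_cover N -> (forall p, M p -> N p) -> forall p, N p -> M p.

Lemma no_finite_cover_complete p : ~ M p ->
  exists l, (forall q, In q l -> M q) /\ forall P, in_basic P p \/ exists q, In q l /\ in_basic P q.
Proof.
intro nMp.
assert (hN : ~ no_finite_cover (fun q => M q \/ q = p)).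
{ intro hN; apply nMp, (Mmax hN); [intros q Mq; left; exact Mq|right; reflexivity]. }
apply NNPP; intro hn; apply hN; intros l Hl lcov.
destruct (@list_choice_or _ _ (fun q => q = p) (fun q q' => q = q' /\ M q') l) as [l' [Hl' Hcov]].
- intros q hq; destruct (Hl q hq) as [Mq|e]; [right; exists q; auto|left; exact e].
- apply hn; exists l'; split.
  + intros q hq; destruct (Hl' q hq) as [q' [<- Mq]]; exact Mq.
  + intro P; destruct (lcov P) as [q [hq Pq]].
    destruct (Hcov q hq) as [->|[q' [hq' [<- _]]]]; [left; exact Pq|right; exists q; auto].
Qed.

Lemma no_finite_cover_split a b : M (a, b) -> M (a, bt) \/ M (tp, b).
Proof.
intro Mab; apply NNPP; intro hn.
destruct (no_finite_cover_complete (p := (a, bt))) as [l1 [Ml1 cov1]]; [tauto|].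
destruct (no_finite_cover_complete (p := (tp, b))) as [l2 [Ml2 cov2]]; [tauto|].
apply HM with ((a, b) :: l1 ++ l2).
- intros p [<-|hp]; [exact Mab|]; apply in_app_iff in hp; destruct hp; auto.
- intro P; destruct (classic (proj1_sig P a)) as [Pa|nPa];
    [destruct (classic (proj1_sig P b)) as [Pb|nPb]|].
  + destruct (cov2 P) as [[_ nPb]|[q [hq Pq]]]; [contradiction|].
    exists q; split; [right; apply in_app_iff; right; exact hq|exact Pq].
  + exists (a, b); split; [left; reflexivity|split; assumption].
  + destruct (cov1 P) as [[Pa _]|[q [hq Pq]]]; [contradiction|].
    exists q; split; [right; apply in_app_iff; left; exact hq|exact Pq].
Qed.

End MaximalNoFiniteCover.

Lemma Xd_compact : compact (@gen_opens A).
Proof.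
intros F HF Fcov; apply NNPP; intro Hno.
set (K := fun p => exists U, F U /\ forall Q, in_basic Q p -> U Q).
assert (HK : no_finite_cover K).
{ intros l Hl lcov; apply Hno.
  destruct (@list_choice_or _ _ (fun _ => False) (fun p U => F U /\ forall Q, in_basic Q p -> U Q) l)
    as [l' [Hl' Hcov]]; [intros p hp; right; exact (Hl p hp)|].
  exists l'; split; [intros U hU; destruct (Hl' U hU) as [p [FU _]]; exact FU|].
  intro Q; destruct (lcov Q) as [p [hp Qp]].
  destruct (Hcov p hp) as [[]|[U [hU [_ pU]]]]; exists U; auto. }
destruct (zorn_superset HK) as [M [HM [KM Mmax]]].
{ intros C HC [X0 CX0] Hch l Hl.
  destruct (chain_list_bound Hch CX0 Hl) as [X [CX HX]]; exact (HC X CX l HX). }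
apply (no_finite_cover_subbasic HM); intro P.
destruct (Fcov P) as [U [FU UP]].
destruct (gen_open_basic_nbhd (HF U FU) UP) as [[a b] [[Pa nPb] abU]].
destruct (no_finite_cover_split HM Mmax (KM (a, b) (ex_intro _ U (conj FU abU)))) as [Ma|Mb];
  [left; exists a|right; exists b]; auto.
Qed.

Lemma clopen_basic_union (U : PF A -> Prop) : clopen (Xd A) U ->
  exists l, forall Q, U Q <-> exists p, In p l /\ in_basic Q p.
Proof.
intros [Uo Uc].
destruct (@finite_subcover (Xd A) HT Xd_compact U {p : A * A | forall Q, in_basic Q p -> U Q}
  (fun i Q => in_basic Q (proj1_sig i)) Uc) as [l Hl].
- intro i; apply basic_open.
- intros Q UQ; destruct (gen_open_basic_nbhd Uo UQ) as [p [Qp pU]].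
  exists (exist _ p pU); exact Qp.
- exists (map (@proj1_sig _ _) l); intro Q; split.
  + intro UQ; destruct (Hl Q UQ) as [i [hi Qi]].
    exists (proj1_sig i); split; [apply in_map; exact hi|exact Qi].
  + intros [p [hp Qp]]; apply in_map_iff in hp; destruct hp as [i [<- _]].
    exact (proj2_sig i Q Qp).
Qed.

(* (E1) and (E2) are exactly what makes S the converse of R on prime filters. *)
Lemma Xd_S_conv (P Q : PF A) : sS (Xd A) P Q <-> sR (Xd A) Q P.
Proof.
destruct P as [P HP], Q as [Q HQ]; simpl; split.
- intros SPQ a b Qab Pa; apply (pf_up HP) with (mt a (ci (im a b) bt)); [|apply (E1 HA)].
  apply (pf_meet HP); [exact Pa|apply SPQ; [exact Qab|apply (pf_proper HQ)]].
- intros RQP a b Qa nQb; apply (RQP tp); [|apply (pf_top HP)].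
  destruct (pf_prime HQ (pf_up HQ Qa (E2 HA a b))); tauto.
Qed.

Lemma Xd_R_closed (P : PF A) : gen_opens (fun Q => ~ sR (Xd A) P Q).
Proof.
apply (top_ext HT (basic_union_open (fun p => proj1_sig P (im (fst p) (snd p))))).
intro Q; split.
- intros [p [Pp [Qa nQb]]] RPQ; exact (nQb (RPQ _ _ Pp Qa)).
- intro nR; apply NNPP; intro hn; apply nR; intros a b Pab Qa; apply NNPP; intro nQb.
  apply hn; exists (a, b); split; [exact Pab|split; assumption].
Qed.

Lemma Xd_S_closed (P : PF A) : gen_opens (fun Q => ~ sS (Xd A) P Q).
Proof.
apply (top_ext HT (basic_union_open (fun p => ~ proj1_sig P (ci (fst p) (snd p))))).
intro Q; split.
- intros [p [nPp [Qa nQb]]] SPQ; exact (nPp (SPQ _ _ Qa nQb)).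
- intro nS; apply NNPP; intro hn; apply nS; intros a b Qa nQb; apply NNPP; intro nPab.
  apply hn; exists (a, b); split; [exact nPab|split; assumption].
Qed.

Lemma Xd_R_inv_clopen (U : PF A -> Prop) : clopen (Xd A) U -> clopen (Xd A) (preR (Xd A) U).
Proof.
intro HU; destruct (clopen_basic_union HU) as [l E].
apply (sp_clopen_ext HT (U := fun Q : PF A => exists p, In p l /\ ~ proj1_sig Q (im (fst p) (snd p)))).
- apply (sp_clopen_list_union HT); intros p _; apply (sp_clopen_compl HT), sigma_clopen.
- intro Q; split.
  + intros [[a b] [hp nQab]].
    destruct (R_succ_witness HA (proj2_sig Q) nQab) as [Q' [HQ' [RQQ' [Q'a nQ'b]]]].
    exists (exist _ Q' HQ'); split; [exact RQQ'|apply E; exists (a, b); split; [exact hp|split; assumption]].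
  + intros [Q' [RQQ' UQ']]; apply E in UQ'; destruct UQ' as [[a b] [hp [Q'a nQ'b]]].
    exists (a, b); split; [exact hp|intro Qab; exact (nQ'b (RQQ' a b Qab Q'a))].
Qed.

Lemma Xd_S_inv_clopen (U : PF A -> Prop) : clopen (Xd A) U -> clopen (Xd A) (preS (Xd A) U).
Proof.
intro HU; destruct (clopen_basic_union HU) as [l E].
apply (sp_clopen_ext HT (U := fun Q : PF A => exists p, In p l /\ proj1_sig Q (ci (fst p) (snd p)))).
- apply (sp_clopen_list_union HT); intros p _; apply sigma_clopen.
- intro Q; split.
  + intros [[a b] [hp Qab]].
    destruct (S_succ_witness HA (proj2_sig Q) Qab) as [Q' [HQ' [SQQ' [Q'a nQ'b]]]].
    exists (exist _ Q' HQ'); split; [exact SQQ'|apply E; exists (a, b); split; [exact hp|split; assumption]].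
  + intros [Q' [SQQ' UQ']]; apply E in UQ'; destruct UQ' as [[a b] [hp [Q'a nQ'b]]].
    exists (a, b); split; [exact hp|exact (SQQ' a b Q'a nQ'b)].
Qed.

Lemma Xd_isWHBS : isWHBS (Xd A).
Proof.
split.
- exact HT.
- exact Xd_compact.
- intros P a Pa; exact Pa.
- intros P Q R PQ QR a Pa; exact (QR a (PQ a Pa)).
- intros P Q PQ QP; apply sig_pred_ext; intro a; split; [apply PQ|apply QP].
- intros P Q nPQ; apply not_all_ex_not in nPQ; destruct nPQ as [a nPQa].
  exists (fun P : PF A => proj1_sig P a); split; [apply sigma_clopen|split; [|tauto]].
  intros P' Q' P'Q' P'a; exact (P'Q' a P'a).
- intros P Q R PQ RQR a b Pab Ra; exact (RQR a b (PQ _ Pab) Ra).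
- intros P Q R PQ SPR a b Ra nRb; exact (PQ _ (SPR a b Ra nRb)).
- exact Xd_S_conv.
- exact Xd_R_closed.
- exact Xd_S_closed.
- exact Xd_R_inv_clopen.
- exact Xd_S_inv_clopen.
Qed.

End DualSpace.

(** * The dual algebra D(X) and the functors on morphisms *)

Lemma D_isWHB (X : WHBSpace) : isWHB (Dd X).
Proof.
pose proof (wsp_ax X) as HX.
split; intros; try unfold ale; apply sig_pred_ext; intro x; simpl; try tauto.
- split; [intro h; split; intros y r u; apply h; auto|].
  intros [h1 h2] y r u; split; [apply h1|apply h2]; auto.
- split; [intro h; split; intros y r u; apply h; auto|].
  intros [h1 h2] y r [u|u]; [apply h1|apply h2]; auto.
- split; [tauto|intros h; split; [exact h|]].
  destruct h as [h1 h2]; intros y r u; apply h2; auto.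
- split; [intros [y [_ [h1 h2]]]; contradiction|tauto].
- split.
  + intros [y [r [[u|u] v]]]; [left|right]; exists y; auto.
  + intros [[y [r [u v]]]|[y [r [u v]]]]; exists y; auto.
- split.
  + intros [y [r [u v]]]; destruct (classic (proj1_sig b y)); [right|left]; exists y; tauto.
  + intros [[y [r [u v]]]|[y [r [u v]]]]; exists y; tauto.
- split; [tauto|intros h; split; [exact h|]].
  destruct h as [y [r [u v]]]; destruct (classic (proj1_sig b y)); [right|left]; exists y; auto.
- split; [tauto|intros h; split; [exact h|]].
  destruct h as [ax [y [Sxy [h _]]]]; apply (S_conv HX) in Sxy; exact (h x Sxy ax).
- split; [tauto|intros ax; split; [exact ax|]].
  destruct (classic (proj1_sig b x)) as [bx|nbx]; [left; exact bx|right].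
  intros y Rxy _; exists x; split; [apply (S_conv HX), Rxy|auto].
Qed.

Section DMorphism.
Variables (X1 X2 : WHBSpace) (f : pt X1 -> pt X2) (Hf : whbs_morphism X1 X2 f).

Lemma preimage_cu (U : Dcar X2) : cu (fun x => proj1_sig U (f x)).
Proof.
destruct U as [U [[Uo Uc] Uup]]; simpl; split; [split|].
- exact (mor_cont Hf Uo).
- exact (mor_cont Hf Uc).
- intros x y xy Ufx; exact (Uup (f x) (f y) (mor_mono Hf xy) Ufx).
Qed.

Definition Dmap (U : Dcar X2) : Dcar X1 := exist _ _ (preimage_cu U).

Lemma Dmap_hom : @hom (Dd X2) (Dd X1) Dmap.
Proof.
split; intros; apply sig_pred_ext; intro x; simpl; try tauto.
- split.
  + intros h y Rxy ay; exact (h (f y) (mor_R_forth Hf Rxy) ay).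
  + intros h z Rfxz az; destruct (mor_R_back Hf Rfxz) as [y [Rxy <-]]; exact (h y Rxy az).
- split.
  + intros [z [Sfxz abz]]; destruct (mor_S_back Hf Sfxz) as [y [Sxy <-]]; exists y; auto.
  + intros [y [Sxy aby]]; exists (f y); split; [exact (mor_S_forth Hf Sxy)|exact aby].
Qed.

End DMorphism.

Section XMorphism.
Variables (A1 A2 : AlgData) (h : A1 -> A2) (HA2 : isWHB A2) (Hh : hom h).

Lemma hom_ale (a b : A1) : ale a b -> ale (h a) (h b).
Proof. unfold ale; intro e; rewrite <- (hom_meet Hh), e; reflexivity. Qed.

Lemma preimage_pf (P : PF A2) : prime_filter (fun a => proj1_sig P (h a)).
Proof.
destruct P as [P HP]; simpl; split.
- rewrite (hom_top Hh); apply (pf_top HP).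
- intros a b Pa Pb; rewrite (hom_meet Hh); apply (pf_meet HP); assumption.
- intros a b Pa ab; exact (pf_up HP Pa (hom_ale ab)).
- rewrite (hom_bot Hh); apply (pf_proper HP).
- intros a b Pab; rewrite (hom_join Hh) in Pab; exact (pf_prime HP Pab).
Qed.

Definition Xmap (P : PF A2) : PF A1 := exist _ _ (preimage_pf P).

Section Image.
Variables (z : A1 -> Prop) (Hz : prime_filter z).

Lemma hom_image_filter : lat_filter (ameet A2) (fun x => exists q, z q /\ ale (h q) x).
Proof.
split.
- intros x y [q [zq qx]] [q' [zq' q'y]]; exists (ameet A1 q q').
  split; [exact (pf_meet Hz zq zq')|rewrite (hom_meet Hh); exact (ale_meet2 HA2 qx q'y)].
- intros x y [q [zq qx]] xy; exists q; split; [exact zq|exact (ale_trans HA2 qx xy)].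
Qed.

Lemma hom_image_coideal :
  lat_ideal (ameet A2) (ajoin A2) (fun y => exists c, ~ z c /\ ale y (h c)).
Proof.
split.
- intros x y [c [nzc xc]] [c' [nzc' yc']]; exists (ajoin A1 c c'); split.
  + intro zcc'; destruct (pf_prime Hz zcc'); contradiction.
  + rewrite (hom_join Hh); exact (ale_join2 HA2 xc yc').
- intros x y [c [nzc yc]] xy; exists c; split; [exact nzc|exact (ale_trans HA2 xy yc)].
Qed.

Lemma Xmap_eq (Q : A2 -> Prop) (HQ : prime_filter Q) :
  (forall x, (exists q, z q /\ ale (h q) x) -> Q x) ->
  (forall y, Q y -> ~ exists c, ~ z c /\ ale y (h c)) ->
  Xmap (exist _ Q HQ) = exist _ z Hz.
Proof.
intros zQ Qnz; apply sig_pred_ext; intro a; simpl; split.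
- intro Qha; apply NNPP; intro nza; exact (Qnz _ Qha (ex_intro _ a (conj nza (ale_refl HA2 _)))).
- intro za; exact (zQ _ (ex_intro _ a (conj za (ale_refl HA2 _)))).
Qed.

End Image.

Lemma Xmap_R_back (P : PF A2) (z : PF A1) :
  sR (Xd A1) (Xmap P) z -> exists Q, sR (Xd A2) P Q /\ Xmap Q = z.
Proof.
destruct P as [P HP], z as [z Hz]; simpl; intro Rz.
destruct (@exists_R_successor A2 HA2 P (fun x => exists q, z q /\ ale (h q) x)
  (fun y => exists c, ~ z c /\ ale y (h c)) HP) as [Q [HQ [zQ [Qnz RPQ]]]].
- exists (h (atop A1)), (atop A1); split; [apply (pf_top Hz)|apply (ale_refl HA2)].
- exact (hom_image_filter Hz).
- exists (h (abot A1)), (abot A1); split; [apply (pf_proper Hz)|apply (ale_refl HA2)].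
- exact (hom_image_coideal Hz).
- intros x y [q [zq qx]] [c [nzc yc]] Pxy; apply nzc, (Rz q c); [|exact zq].
  rewrite (hom_imp Hh); exact (pf_up HP Pxy (imp_le_imp HA2 qx yc)).
- exists (exist _ Q HQ); split; [exact RPQ|exact (Xmap_eq Hz HQ zQ Qnz)].
Qed.

Lemma Xmap_S_back (P : PF A2) (z : PF A1) :
  sS (Xd A1) (Xmap P) z -> exists Q, sS (Xd A2) P Q /\ Xmap Q = z.
Proof.
destruct P as [P HP], z as [z Hz]; simpl; intro Sz.
destruct (@exists_S_successor A2 HA2 P (fun x => exists q, z q /\ ale (h q) x)
  (fun y => exists c, ~ z c /\ ale y (h c)) HP) as [Q [HQ [zQ [Qnz SPQ]]]].
- exists (h (atop A1)), (atop A1); split; [apply (pf_top Hz)|apply (ale_refl HA2)].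
- exact (hom_image_filter Hz).
- exists (h (abot A1)), (abot A1); split; [apply (pf_proper Hz)|apply (ale_refl HA2)].
- exact (hom_image_coideal Hz).
- intros x y [q [zq qx]] [c [nzc yc]].
  apply (pf_up HP) with (h (acoimp A1 q c)); [exact (Sz q c zq nzc)|].
  rewrite (hom_coimp Hh); exact (coimp_le_coimp HA2 qx yc).
- exists (exist _ Q HQ); split; [exact SPQ|exact (Xmap_eq Hz HQ zQ Qnz)].
Qed.

Lemma Xmap_mor : whbs_morphism (Xd A2) (Xd A1) Xmap.
Proof.
split.
- apply (continuous_into_Xd (Y := Xd A2) (f := Xmap) (gen_opens_topology A2));
    intro a; [apply sigma_open|apply sigma_compl_open].
- intros P Q PQ a; apply PQ.
- intros P Q RPQ a b; simpl; rewrite (hom_imp Hh); apply RPQ.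
- exact Xmap_R_back.
- intros P Q SPQ a b Qa nQb; simpl; rewrite (hom_coimp Hh); exact (SPQ _ _ Qa nQb).
- exact Xmap_S_back.
Qed.

End XMorphism.

(** * The natural isomorphisms sigma and epsilon *)

Lemma bijective_hom_iso (A B : AlgData) (h : A -> B) : hom h ->
  (forall a b, h a = h b -> a = b) -> (forall b, exists a, h a = b) -> alg_iso h.
Proof.
intros Hh inj surj; split; [exact Hh|].
set (g := fun b => proj1_sig (constructive_indefinite_description _ (surj b))).
assert (gK : forall b, h (g b) = b)
  by (intro b; exact (proj2_sig (constructive_indefinite_description _ (surj b)))).
exists g; split; [|split; [intro a; apply inj; rewrite gK; reflexivity|exact gK]].
split; intros; apply inj; rewrite ?gK;
  [rewrite (hom_meet Hh)|rewrite (hom_join Hh)|rewrite (hom_imp Hh)|rewrite (hom_coimp Hh)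
  |rewrite (hom_bot Hh)|rewrite (hom_top Hh)]; rewrite ?gK; reflexivity.
Qed.

Section Sigma.
Variables (A : AlgData) (HA : isWHB A) (HX : isWHBS (Xd A)).

Lemma sigma_cu (a : A) : @cu (XWHBS HX) (fun P : PF A => proj1_sig P a).
Proof. split; [exact (sigma_clopen a)|intros P Q PQ Pa; exact (PQ a Pa)]. Qed.

Definition sigma_map (a : A) : Dcar (XWHBS HX) := exist _ _ (sigma_cu a).

Lemma sigma_hom : @hom A (Dd (XWHBS HX)) sigma_map.
Proof.
split; intros; apply sig_pred_ext; intro P; simpl.
- split; [apply (pf_meetE HA (proj2_sig P))|intros [Pa Pb]; exact (pf_meet (proj2_sig P) Pa Pb)].
- split; [apply (pf_prime (proj2_sig P))|apply (pf_joinI HA (proj2_sig P))].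
- split; [intros Pab Q RPQ Qa; exact (RPQ a b Pab Qa)|].
  intro h; apply NNPP; intro nPab.
  destruct (R_succ_witness HA (proj2_sig P) nPab) as [Q [HQ [RPQ [Qa nQb]]]].
  exact (nQb (h (exist _ Q HQ) RPQ Qa)).
- split; [|intros [Q [SPQ [Qa nQb]]]; exact (SPQ a b Qa nQb)].
  intro Pab; destruct (S_succ_witness HA (proj2_sig P) Pab) as [Q [HQ [SPQ [Qa nQb]]]].
  exists (exist _ Q HQ); auto.
- split; [apply (pf_proper (proj2_sig P))|tauto].
- split; [tauto|intros _; apply (pf_top (proj2_sig P))].
Qed.

Lemma sigma_inj (a b : A) : sigma_map a = sigma_map b -> a = b.
Proof.
intro e.
assert (E : forall P : PF A, proj1_sig P a <-> proj1_sig P b).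
{ intro P; change (proj1_sig (sigma_map a) P <-> proj1_sig (sigma_map b) P); rewrite e; tauto. }
apply (ale_anti HA); apply NNPP; intro n; destruct (ale_separation HA n) as [P [HP [Pa nPb]]];
  apply nPb, (E (exist _ P HP)), Pa.
Qed.

Lemma clopen_upset_sigma_nbhd (U : Dcar (XWHBS HX)) (P : PF A) : proj1_sig U P ->
  exists a, proj1_sig P a /\ forall Q : PF A, proj1_sig Q a -> proj1_sig U Q.
Proof.
destruct U as [U [[Uo Uc] Uup]]; simpl; intro UP.
destruct (@finite_subcover (Xd A) (gen_opens_topology A) (Xd_compact HA) (fun Q => ~ U Q)
  {a : A | proj1_sig P a} (fun i Q => ~ proj1_sig Q (proj1_sig i))) as [l Hl].
- apply (top_ext (gen_opens_topology A) Uo); intro Q; split; [tauto|apply NNPP].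
- intro i; apply sigma_compl_open.
- intros Q nUQ; assert (nPQ : ~ forall a, proj1_sig P a -> proj1_sig Q a)
    by (intro PQ; exact (nUQ (Uup P Q PQ UP))).
  apply not_all_ex_not in nPQ; destruct nPQ as [a nPQa]; apply imply_to_and in nPQa.
  exists (exist _ a (proj1 nPQa)); exact (proj2 nPQa).
- exists (lmeet (map (@proj1_sig _ _) l)); split.
  + apply (pf_lmeet HA _ (proj2_sig P)); intros a ha; apply in_map_iff in ha.
    destruct ha as [i [<- _]]; exact (proj2_sig i).
  + intros Q Qa; apply NNPP; intro nUQ; destruct (Hl Q nUQ) as [i [hi nQi]].
    apply nQi, (proj1 (pf_lmeet HA _ (proj2_sig Q)) Qa), in_map, hi.
Qed.

Lemma sigma_surj (U : Dcar (XWHBS HX)) : exists a, sigma_map a = U.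
Proof.
destruct (@finite_subcover (Xd A) (gen_opens_topology A) (Xd_compact HA) (proj1_sig U)
  {a : A | forall Q : PF A, proj1_sig Q a -> proj1_sig U Q} (fun i Q => proj1_sig Q (proj1_sig i)))
  as [l Hl].
- exact (proj2 (proj1 (proj2_sig U))).
- intro i; apply sigma_open.
- intros Q UQ; destruct (clopen_upset_sigma_nbhd UQ) as [a [Qa aU]].
  exists (exist _ a aU); exact Qa.
- exists (ljoin (map (@proj1_sig _ _) l)); apply sig_pred_ext; intro Q; simpl.
  rewrite (pf_ljoin HA _ (proj2_sig Q)); split.
  + intros [a [ha Qa]]; apply in_map_iff in ha; destruct ha as [i [<- _]].
    exact (proj2_sig i Q Qa).
  + intro UQ; destruct (Hl Q UQ) as [i [hi Qi]].
    exists (proj1_sig i); split; [apply in_map, hi|exact Qi].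
Qed.

Lemma sigma_iso : @alg_iso A (Dd (XWHBS HX)) sigma_map.
Proof. exact (bijective_hom_iso sigma_hom sigma_inj sigma_surj). Qed.

End Sigma.

Lemma bijective_morphism_iso (X1 X2 : SpData) (f : pt X1 -> pt X2) :
  is_topology (opens X2) -> whbs_morphism X1 X2 f ->
  (forall x y, f x = f y -> x = y) -> (forall y, exists x, f x = y) ->
  (forall x y, sle X2 (f x) (f y) -> sle X1 x y) ->
  (forall x y, sR X2 (f x) (f y) -> sR X1 x y) ->
  (forall x y, sS X2 (f x) (f y) -> sS X1 x y) ->
  (forall U, opens X1 U -> opens X2 (fun y => exists x, U x /\ f x = y)) ->
  space_iso X1 X2 f.
Proof.
intros HT2 Hf inj surj le_refl' R_refl S_refl f_open; split; [exact Hf|].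
set (g := fun y => proj1_sig (constructive_indefinite_description _ (surj y))).
assert (gK : forall y, f (g y) = y)
  by (intro y; exact (proj2_sig (constructive_indefinite_description _ (surj y)))).
assert (Kg : forall x, g (f x) = x) by (intro x; apply inj; rewrite gK; reflexivity).
exists g; split; [|split; [exact Kg|exact gK]].
split.
- intros U HU; apply (top_ext HT2 (f_open U HU)); intro y; split.
  + intros [x [Ux <-]]; rewrite Kg; exact Ux.
  + intro Ugy; exists (g y); split; [exact Ugy|apply gK].
- intros y y' yy'; apply le_refl'; rewrite !gK; exact yy'.
- intros y y' Ryy'; apply R_refl; rewrite !gK; exact Ryy'.
- intros y x Rgyx; exists (f x); split; [|apply Kg].
  rewrite <- (gK y); exact (mor_R_forth Hf Rgyx).
- intros y y' Syy'; apply S_refl; rewrite !gK; exact Syy'.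
- intros y x Sgyx; exists (f x); split; [|apply Kg].
  rewrite <- (gK y); exact (mor_S_forth Hf Sgyx).
Qed.

Section Epsilon.
Variable X : WHBSpace.
Let HX := wsp_ax X.
Let HT := sp_top HX.
Let HD := D_isWHB X.

Lemma ale_D (U V : Dcar X) : ale (A := Dd X) U V <-> forall x, proj1_sig U x -> proj1_sig V x.
Proof.
unfold ale; split.
- intros e x Ux; rewrite <- e in Ux; exact (proj2 Ux).
- intro UV; apply sig_pred_ext; intro x; simpl; split; [tauto|auto].
Qed.

Lemma eps_pf (x : pt X) : prime_filter (A := Dd X) (fun U : Dcar X => proj1_sig U x).
Proof.
split; simpl.
- exact I.
- intros U V Ux Vx; split; assumption.
- intros U V Ux UV; exact (proj1 (ale_D U V) UV x Ux).
- tauto.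
- tauto.
Qed.

Definition eps_map (x : pt X) : PF (Dd X) := exist _ _ (eps_pf x).

Lemma clopen_upset_sep x y : ~ sle X x y -> exists U : Dcar X, proj1_sig U x /\ ~ proj1_sig U y.
Proof.
intro nxy; destruct (priestley HX nxy) as [U [Ucl [Uup [Ux nUy]]]].
exists (exist _ U (conj Ucl Uup)); split; assumption.
Qed.

Lemma D_pf_separating_pair (P : PF (Dd X)) (C : pt X -> Prop) :
  opens X (fun z => ~ C z) ->
  (forall z, C z -> exists U : Dcar X,
     (proj1_sig P U /\ ~ proj1_sig U z) \/ (~ proj1_sig P U /\ proj1_sig U z)) ->
  exists U V : Dcar X, proj1_sig P U /\ ~ proj1_sig P V /\
    forall z, C z -> ~ proj1_sig U z \/ proj1_sig V z.
Proof.
intros Cc Hsep.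
destruct (@finite_subcover X HT (sp_compact HX) C (Dcar X)
  (fun U z => (proj1_sig P U /\ ~ proj1_sig U z) \/ (~ proj1_sig P U /\ proj1_sig U z)) Cc)
  as [l Hl]; [|exact Hsep|].
- intro U; destruct (proj1 (proj2_sig U)) as [Uo Uc].
  destruct (classic (proj1_sig P U)) as [PU|nPU];
    [apply (top_ext HT Uc)|apply (top_ext HT Uo)]; intro z; tauto.
- destruct (pf_list_bounds HD l (proj2_sig P)) as [U [V [PU [nPV Hb]]]].
  exists U, V; split; [exact PU|split; [exact nPV|]].
  intros z Cz; destruct (Hl z Cz) as [W [hW [[PW nWz]|[nPW Wz]]]].
  + left; intro Uz; exact (nWz (proj1 (ale_D U W) (proj1 (Hb W hW) PW) z Uz)).
  + right; exact (proj1 (ale_D W V) (proj2 (Hb W hW) nPW) z Wz).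
Qed.

Lemma open_basis (O : pt X -> Prop) (y : pt X) : opens X O -> O y ->
  exists U V : Dcar X, proj1_sig U y /\ ~ proj1_sig V y /\
    forall z, proj1_sig U z -> ~ proj1_sig V z -> O z.
Proof.
intros Oo Oy.
destruct (@D_pf_separating_pair (eps_map y) (fun z => ~ O z)) as [U [V [Uy [nVy HUV]]]].
- apply (top_ext HT Oo); intro z; split; [tauto|apply NNPP].
- intros z nOz; assert (h : ~ sle X y z \/ ~ sle X z y).
  { apply NNPP; intro n; apply nOz.
    rewrite <- (le_anti HX (x := y) (y := z)); [exact Oy| |]; apply NNPP; tauto. }
  destruct h as [h|h]; destruct (clopen_upset_sep h) as [U [U1 U2]]; exists U; [left|right]; auto.
- exists U, V; split; [exact Uy|split; [exact nVy|]].
  intros z Uz nVz; apply NNPP; intro nOz; destruct (HUV z nOz); contradiction.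
Qed.

Lemma eps_surj (P : PF (Dd X)) : exists x, eps_map x = P.
Proof.
apply NNPP; intro Hn.
destruct (@D_pf_separating_pair P (fun _ => True)) as [U [V [PU [nPV HUV]]]].
- apply (top_ext HT (top_empty HT)); tauto.
- intros x _; apply NNPP; intro n; apply Hn; exists x; apply sig_pred_ext; intro U; simpl.
  split; intro h; apply NNPP; intro h'; apply n; exists U; tauto.
- apply nPV, (pf_up (proj2_sig P) PU), ale_D; intros z Uz.
  destruct (HUV z I); [contradiction|assumption].
Qed.

Lemma eps_le_reflect x y : sle (Xd (Dd X)) (eps_map x) (eps_map y) -> sle X x y.
Proof.
intro h; apply NNPP; intro n; destruct (clopen_upset_sep n) as [U [Ux nUy]].
exact (nUy (h U Ux)).
Qed.

Lemma eps_inj x y : eps_map x = eps_map y -> x = y.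
Proof.
intro e; apply (le_anti HX); apply eps_le_reflect; rewrite e; intros U h; exact h.
Qed.

Lemma eps_R_reflect x y : sR (Xd (Dd X)) (eps_map x) (eps_map y) -> sR X x y.
Proof.
intro h; apply NNPP; intro n.
destruct (open_basis (R_closed HX x) n) as [U [V [Uy [nVy HUV]]]].
apply nVy, (h U V); [|exact Uy]; simpl.
intros z Rxz Uz; apply NNPP; intro nVz; exact (HUV z Uz nVz Rxz).
Qed.

Lemma eps_S_reflect x y : sS (Xd (Dd X)) (eps_map x) (eps_map y) -> sS X x y.
Proof.
intro h; apply NNPP; intro n.
destruct (open_basis (S_closed HX x) n) as [U [V [Uy [nVy HUV]]]].
destruct (h U V Uy nVy) as [z [Sxz [Uz nVz]]]; exact (HUV z Uz nVz Sxz).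
Qed.

Lemma eps_open (O : pt X -> Prop) : opens X O ->
  gen_opens (fun P : PF (Dd X) => exists x, O x /\ eps_map x = P).
Proof.
intro Oo.
apply (top_ext (gen_opens_topology (Dd X)) (@basic_union_open (Dd X)
  (fun p => forall z, proj1_sig (fst p) z -> ~ proj1_sig (snd p) z -> O z))).
intro P; split.
- intros [[U V] [UVO [PU nPV]]]; destruct (eps_surj P) as [x <-].
  exists x; split; [exact (UVO x PU nPV)|reflexivity].
- intros [x [Ox <-]]; destruct (open_basis Oo Ox) as [U [V [Ux [nVx UVO]]]].
  exists (U, V); split; [exact UVO|split; assumption].
Qed.

Lemma eps_mor : whbs_morphism X (Xd (Dd X)) eps_map.
Proof.
split.
- apply (continuous_into_Xd (Y := X) (f := eps_map) HT); intro U;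
    [exact (proj1 (proj1 (proj2_sig U)))|exact (proj2 (proj1 (proj2_sig U)))].
- intros x y xy U Ux; exact (proj2 (proj2_sig U) x y xy Ux).
- intros x y Rxy U V UV Ux; exact (UV y Rxy Ux).
- intros x Q RxQ; destruct (eps_surj Q) as [y <-].
  exists y; split; [exact (eps_R_reflect RxQ)|reflexivity].
- intros x y Sxy U V Uy nVy; exists y; auto.
- intros x Q SxQ; destruct (eps_surj Q) as [y <-].
  exists y; split; [exact (eps_S_reflect SxQ)|reflexivity].
Qed.

Lemma eps_iso : space_iso X (Xd (Dd X)) eps_map.
Proof.
apply bijective_morphism_iso; [exact (gen_opens_topology (Dd X))|exact eps_mor|exact eps_inj
  |exact eps_surj|exact eps_le_reflect|exact eps_R_reflect|exact eps_S_reflect|exact eps_open].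
Qed.

End Epsilon.

Theorem theorem5p7 :
  (* X on objects: X(A) is a WHB-space *)
  (forall A : AlgData, isWHB A -> isWHBS (Xd A)) /\
  (* D on objects: D(X) is a WHB-algebra *)
  (forall X : WHBSpace, isWHB (Dd X)) /\
  (* X on morphisms: X(h)(P) = h^{-1}(P) is a WHBS-morphism *)
  (forall (A1 A2 : AlgData) (h : A1 -> A2),
      isWHB A1 -> isWHB A2 -> hom h ->
      exists phi : PF A2 -> PF A1,
        (forall P a, proj1_sig (phi P) a <-> proj1_sig P (h a)) /\
        whbs_morphism (Xd A2) (Xd A1) phi) /\
  (* D on morphisms: D(f)(U) = f^{-1}(U) is a homomorphism *)
  (forall (X1 X2 : WHBSpace) (f : pt X1 -> pt X2),
      whbs_morphism X1 X2 f ->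
      exists psi : Dcar X2 -> Dcar X1,
        (forall U x, proj1_sig (psi U) x <-> proj1_sig U (f x)) /\
        @hom (Dd X2) (Dd X1) psi) /\
  (* sigma_A : A -> D(X(A)), sigma_A(a) = {P | a in P}, is an isomorphism *)
  (forall (A : AlgData) (HA : isWHB A) (HX : isWHBS (Xd A)),
      exists sigma : A -> Dcar (XWHBS HX),
        (forall a P, proj1_sig (sigma a) P <-> proj1_sig P a) /\
        @alg_iso A (Dd (XWHBS HX)) sigma) /\
  (* epsilon_X : X -> X(D(X)), epsilon_X(x) = {U | x in U}, is an isomorphism *)
  (forall X : WHBSpace,
      exists eps : pt X -> PF (Dd X),
        (forall x U, proj1_sig (eps x) U <-> proj1_sig U x) /\
        space_iso X (Xd (Dd X)) eps) /\
  (* naturality of sigma: D(X(h)) o sigma_A1 = sigma_A2 o h *)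
  (forall (A1 A2 : AlgData) (h : A1 -> A2) (HA1 : isWHB A1) (HA2 : isWHB A2)
          (HX1 : isWHBS (Xd A1)) (HX2 : isWHBS (Xd A2)),
      hom h ->
      forall (sigma1 : A1 -> Dcar (XWHBS HX1)) (sigma2 : A2 -> Dcar (XWHBS HX2))
             (phi : PF A2 -> PF A1) (psi : Dcar (XWHBS HX1) -> Dcar (XWHBS HX2)),
        (forall a P, proj1_sig (sigma1 a) P <-> proj1_sig P a) ->
        (forall a P, proj1_sig (sigma2 a) P <-> proj1_sig P a) ->
        (forall P a, proj1_sig (phi P) a <-> proj1_sig P (h a)) ->
        (forall U P, proj1_sig (psi U) P <-> proj1_sig U (phi P)) ->
        forall a, psi (sigma1 a) = sigma2 (h a)) /\
  (* naturality of epsilon: X(D(f)) o epsilon_X1 = epsilon_X2 o f *)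
  (forall (X1 X2 : WHBSpace) (f : pt X1 -> pt X2),
      whbs_morphism X1 X2 f ->
      forall (eps1 : pt X1 -> PF (Dd X1)) (eps2 : pt X2 -> PF (Dd X2))
             (psi : Dcar X2 -> Dcar X1) (phi : PF (Dd X1) -> PF (Dd X2)),
        (forall x U, proj1_sig (eps1 x) U <-> proj1_sig U x) ->
        (forall x U, proj1_sig (eps2 x) U <-> proj1_sig U x) ->
        (forall U x, proj1_sig (psi U) x <-> proj1_sig U (f x)) ->
        (forall P U, proj1_sig (phi P) U <-> proj1_sig P (psi U)) ->
        forall x, phi (eps1 x) = eps2 (f x)).
Proof.
split; [exact Xd_isWHBS|].
split; [exact D_isWHB|].
split.
{ intros A1 A2 h HA1 HA2 Hh; exists (Xmap Hh); split; [intros P a; tauto|exact (Xmap_mor HA2 Hh)]. }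
split.
{ intros X1 X2 f Hf; exists (Dmap Hf); split; [intros U x; tauto|exact (Dmap_hom Hf)]. }
split.
{ intros A HA HX; exists (sigma_map HX); split; [intros a P; tauto|exact (sigma_iso HA HX)]. }
split.
{ intro X; exists (@eps_map X); split; [intros x U; tauto|exact (eps_iso X)]. }
split.
{ intros A1 A2 h HA1 HA2 HX1 HX2 Hh sigma1 sigma2 phi psi H1 H2 H3 H4 a.
  apply sig_pred_ext; intro P; rewrite H4, H1, H3, H2; tauto. }
intros X1 X2 f Hf eps1 eps2 psi phi H1 H2 H3 H4 x.
apply sig_pred_ext; intro U; rewrite H4, H1, H3, H2; tauto.
Qed.
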